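(* Let $C$ be a small 2-category and $NC$ its nerve. Then $NC$ is a weak 2-category if and only if every 2-cell of $C$ is invertible, and $NC$ is a weak 2-groupoid if and only if $C$ is a 2-groupoid.
   Context: A 2-category has objects, arrows and 2-cells, with vertical composition $\bullet$ of 2-cells and horizontal composition $\circ$. A 2-groupoid is a 2-category whose objects form a set, all of whose 2-cells are invertible, and in which every arrow $f\colon x\to y$ admits $g\colon y\to x$ with invertible 2-cells $fg\cong\mathrm{id}_y$, $gf\cong \mathrm{id}_x$. A normal lax functor $\phi\colon C\dashrightarrow D$ between 2-categories consists of maps on objects, arrows and 2-cells preserving sources, targets, identities and $\bullet$, together with 2-cells $\phi_{1,1}(g,f)\colon \phi(gf)\Rightarrow\phi(g)\circ\phi(f)$ for composable $g,f$, such that: $\phi_{1,1}(\mathrm{id},f)=\mathrm{id}_{\phi(f)}=\phi_{1,1}(f,\mathrm{id})$; $(\phi(\beta)\circ\phi(\alpha))\bullet\phi_{1,1}(g,f)=\phi_{1,1}(g',f')\bullet\phi(\beta\circ\alpha)$ for 2-cells $\alpha\colon f\Rightarrow f'$, $\beta\colon g\Rightarrow g'$; and $(\phi_{1,1}(h,g)\circ\phi(f))\bullet\phi_{1,1}(hg,f)=(\phi(h)\circ\phi_{1,1}(g,f))\bullet\phi_{1,1}(h,gf)$. The ordinal $[n]=\{0<1<\dots<n\}$ is viewed as a category (one arrow $i\to j$ iff $i\le j$) and as a 2-category with only identity 2-cells. The nerve $NC$ is the simplicial set with $NC_n$ the set of normal lax functors $[n]\dashrightarrow C$, with simplicial operators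 given by precomposition with order-preserving maps. For a simplicial set $X$, the horn $\Lambda^n_k\subset\Delta^n$ is the union of all faces of $\Delta^n$ except the $k$-th; it is inner if $0<k<n$. $X$ is a weak $m$-category if every map $\Lambda^n_k\to X$ with $0<k<n$ extends to $\Delta^n\to X$, uniquely when $n>m$; $X$ is a weak $m$-groupoid if the same holds for all horns $\Lambda^n_k$, $0\le k\le n$. *)

From mathcomp Require Import all_boot.
Set Implicit Arguments.
Unset Strict Implicit.
Unset Printing Implicit Defensive.

(* Strict (small) 2-categories, essentially-algebraic presentation.   *)
(* compA g f = g o f  (defined when tgt f = src g);                    *)
(* vcomp b a = b (vertical) a  (defined when cod2 a = dom2 b);         *)
(* hcomp b a = b (horizontal) a (defined when tgt (dom2 a) = src (dom2 b)). *)
Record TwoCat := {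
  Ob : Type; Ar : Type; Cl : Type;
  src : Ar -> Ob; tgt : Ar -> Ob;
  idA : Ob -> Ar;
  compA : Ar -> Ar -> Ar;
  dom2 : Cl -> Ar; cod2 : Cl -> Ar;
  id2 : Ar -> Cl;
  vcomp : Cl -> Cl -> Cl;
  hcomp : Cl -> Cl -> Cl;
  src_idA : forall x, src (idA x) = x;
  tgt_idA : forall x, tgt (idA x) = x;
  src_compA : forall g f, tgt f = src g -> src (compA g f) = src f;
  tgt_compA : forall g f, tgt f = src g -> tgt (compA g f) = tgt g;
  compA_idl : forall f, compA (idA (tgt f)) f = f;
  compA_idr : forall f, compA f (idA (src f)) = f;
  compA_assoc : forall h g f, tgt f = src g -> tgt g = src h ->
    compA h (compA g f) = compA (compA h g) f;
  src_cod2 : forall a, src (cod2 a) = src (dom2 a);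
  tgt_cod2 : forall a, tgt (cod2 a) = tgt (dom2 a);
  dom_id2 : forall f, dom2 (id2 f) = f;
  cod_id2 : forall f, cod2 (id2 f) = f;
  dom_vcomp : forall b a, cod2 a = dom2 b -> dom2 (vcomp b a) = dom2 a;
  cod_vcomp : forall b a, cod2 a = dom2 b -> cod2 (vcomp b a) = cod2 b;
  vcomp_idl : forall a, vcomp (id2 (cod2 a)) a = a;
  vcomp_idr : forall a, vcomp a (id2 (dom2 a)) = a;
  vcomp_assoc : forall c b a, cod2 a = dom2 b -> cod2 b = dom2 c ->
    vcomp c (vcomp b a) = vcomp (vcomp c b) a;
  dom_hcomp : forall b a, tgt (dom2 a) = src (dom2 b) ->
    dom2 (hcomp b a) = compA (dom2 b) (dom2 a);
  cod_hcomp : forall b a, tgt (dom2 a) = src (dom2 b) ->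
    cod2 (hcomp b a) = compA (cod2 b) (cod2 a);
  hcomp_id2 : forall g f, tgt f = src g ->
    hcomp (id2 g) (id2 f) = id2 (compA g f);
  hcomp_idl : forall a, hcomp (id2 (idA (tgt (dom2 a)))) a = a;
  hcomp_idr : forall a, hcomp a (id2 (idA (src (dom2 a)))) = a;
  hcomp_assoc : forall c b a, tgt (dom2 a) = src (dom2 b) ->
    tgt (dom2 b) = src (dom2 c) -> hcomp c (hcomp b a) = hcomp (hcomp c b) a;
  interchange : forall b' b a' a, cod2 a = dom2 a' -> cod2 b = dom2 b' ->
    tgt (dom2 a) = src (dom2 b) ->
    vcomp (hcomp b' a') (hcomp b a) = hcomp (vcomp b' b) (vcomp a' a)
}.

Arguments src {_}. Arguments tgt {_}. Arguments idA {_}. Arguments compA {_}.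
Arguments dom2 {_}. Arguments cod2 {_}. Arguments id2 {_}.
Arguments vcomp {_}. Arguments hcomp {_}.

Definition is_iso2 (C : TwoCat) (a : Cl C) : Prop :=
  exists b : Cl C, [/\ cod2 a = dom2 b, cod2 b = dom2 a,
    vcomp b a = id2 (dom2 a) & vcomp a b = id2 (cod2 a)].

Definition is_2groupoid (C : TwoCat) : Prop :=
  (forall a : Cl C, is_iso2 a) /\
  (forall f : Ar C, exists g : Ar C, [/\ src g = tgt f, tgt g = src f,
     (exists a : Cl C, [/\ dom2 a = compA f g, cod2 a = idA (tgt f) & is_iso2 a])
   & (exists b : Cl C, [/\ dom2 b = compA g f, cod2 b = idA (src f) & is_iso2 b])]).

Definition mono (m n : nat) :=
  {f : 'I_m.+1 -> 'I_n.+1 | forall i j : 'I_m.+1, i <= j -> f i <= f j}.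

Definition mono_fun m n (t : mono m n) : 'I_m.+1 -> 'I_n.+1 := proj1_sig t.
Coercion mono_fun : mono >-> Funclass.
Definition monoP m n (t : mono m n) : forall i j : 'I_m.+1, i <= j -> t i <= t j :=
  proj2_sig t.

Definition mono_comp m n p (t : mono m n) (s : mono p m) : mono p n :=
  exist (fun f : 'I_p.+1 -> 'I_n.+1 => forall i j : 'I_p.+1, i <= j -> f i <= f j)
    (fun i => t (s i)) (fun i j h => monoP t (monoP s h)).

(* Normal lax functors [n] -/-> C.  The arrow i -> j of [n] (i <= j) is *)
(* sent to nar i j _, and phi_{1,1}(j->k, i->j) is ncl i j k _ _.       *)
(* 2-cells of [n] are identities, sent to identities.                   *)
Unset Implicit Arguments.
Record NLax (C : TwoCat) (n : nat) := {
  nob : 'I_n.+1 -> Ob C;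
  nar : forall i j : 'I_n.+1, i <= j -> Ar C;
  ncl : forall i j k : 'I_n.+1, i <= j -> j <= k -> Cl C;
  nar_src : forall i j h, src (nar i j h) = nob i;
  nar_tgt : forall i j h, tgt (nar i j h) = nob j;
  nar_id : forall i h, nar i i h = idA (nob i);
  ncl_dom : forall i j k hij hjk hik, dom2 (ncl i j k hij hjk) = nar i k hik;
  ncl_cod : forall i j k hij hjk,
    cod2 (ncl i j k hij hjk) = compA (nar j k hjk) (nar i j hij);
  ncl_idl : forall i j hij hjj, ncl i j j hij hjj = id2 (nar i j hij);
  ncl_idr : forall i k hii hik, ncl i i k hii hik = id2 (nar i k hik);
  ncl_nat : forall i j k hij hjk hik,
    vcomp (hcomp (id2 (nar j k hjk)) (id2 (nar i j hij))) (ncl i j k hij hjk)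
    = vcomp (ncl i j k hij hjk) (id2 (nar i k hik));
  ncl_assoc : forall i j k l hij hjk hkl hjl hik,
    vcomp (hcomp (ncl j k l hjk hkl) (id2 (nar i j hij))) (ncl i j l hij hjl)
    = vcomp (hcomp (id2 (nar k l hkl)) (ncl i j k hij hjk)) (ncl i k l hik hkl)
}.

Set Implicit Arguments.
Arguments nob {C n}. Arguments nar {C n} _ _ _. Arguments ncl {C n} _ _ _ _ _.

Section Pull.
Variables (C : TwoCat) (m n : nat) (t : mono m n) (phi : NLax C n).

Definition pull : NLax C m.
Proof.
refine (@Build_NLax C m (fun i => nob phi (t i))
  (fun i j h => nar phi (t i) (t j) (monoP t h))
  (fun i j k h1 h2 => ncl phi (t i) (t j) (t k) (monoP t h1) (monoP t h2)) _ _ _ _ _ _ _ _ _).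
- by move=> i j h; apply: nar_src.
- by move=> i j h; apply: nar_tgt.
- by move=> i h; apply: nar_id.
- by move=> i j k h1 h2 h3; apply: ncl_dom.
- by move=> i j k h1 h2; apply: ncl_cod.
- by move=> i j h1 h2; apply: ncl_idl.
- by move=> i j h1 h2; apply: ncl_idr.
- by move=> i j k h1 h2 h3; apply: ncl_nat.
- by move=> i j k l h1 h2 h3 h4 h5; apply: ncl_assoc.
Defined.
End Pull.

Record sset := {
  sx : nat -> Type;
  sact : forall m n, mono m n -> sx n -> sx m
}.

Definition nerve (C : TwoCat) : sset :=
  {| sx := fun n => NLax C n; sact := fun m n t phi => pull t phi |}.

(* the m-simplex t of Delta^n lies in the horn Lambda^n_k iff it lies in a
   face d_j with j <> k, i.e. its image misses some j <> k *)
Definition inHorn n (k : 'I_n.+1) m (t : mono m n) : bool :=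
  [exists j : 'I_n.+1, (j != k) && [forall i : 'I_m.+1, t i != j]].

(* a map Lambda^n_k -> X: a natural family indexed by the simplices of the
   horn (values outside the horn are irrelevant) *)
Definition horn_map (X : sset) n (k : 'I_n.+1)
    (x : forall m, mono m n -> sx X m) : Prop :=
  forall m p (t : mono m n) (s : mono p m), inHorn k t ->
    sact s (x m t) = x p (mono_comp t s).

Definition simplex_map (X : sset) n (z : forall m, mono m n -> sx X m) : Prop :=
  forall m p (t : mono m n) (s : mono p m), sact s (z m t) = z p (mono_comp t s).

Definition extends (X : sset) n (k : 'I_n.+1)
    (z x : forall m, mono m n -> sx X m) : Prop :=
  forall m (t : mono m n), inHorn k t -> z m t = x m t.

Definition has_filler (X : sset) n (k : 'I_n.+1) : Prop :=
  forall x : forall m, mono m n -> sx X m, horn_map k x ->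
    exists z : forall m, mono m n -> sx X m, simplex_map z /\ extends k z x.

Definition unique_filler (X : sset) n (k : 'I_n.+1) : Prop :=
  forall x z z' : forall m, mono m n -> sx X m, horn_map k x ->
    simplex_map z -> extends k z x -> simplex_map z' -> extends k z' x ->
    forall m (t : mono m n), z m t = z' m t.

Definition is_weak_cat (X : sset) (m : nat) : Prop :=
  forall n (k : 'I_n.+1), 0 < k < n ->
    has_filler X k /\ (m < n -> unique_filler X k).

Definition is_weak_grpd (X : sset) (m : nat) : Prop :=
  forall n (k : 'I_n.+1), 0 < n ->
    has_filler X k /\ (m < n -> unique_filler X k).

(* A simplex of the nerve is determined by its 2-skeleton: objects x_i, arrows
   f_ij and 2-cells a_ijl : f_il => f_jl f_ij, subject to a cocycle condition on
   every tetrahedron; filling a horn of NC thus means completing such data.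
   A horn of dimension at least 5 (at least 4, for uniqueness) already contains
   the whole 2-skeleton and all tetrahedra. In dimension 4 only the cocycle
   condition of the missing face is absent, and it follows from the other four
   around a pentagon of 2-cells. In dimension 3 the missing 2-cell must solve the
   cocycle equation, which has a unique solution when 2-cells are invertible; in
   dimension 2 the missing arrow is a composite. For an outer horn the extreme
   edge must moreover be an equivalence, so that whiskering with it is full and
   faithful. Conversely, filling Lambda^3_1 gives every 2-cell a right inverse,
   which the uniqueness of that filler makes two-sided, and filling Lambda^2_0 and
   Lambda^2_2 gives every arrow a pseudo-inverse. *)

From Pilot Require Import Defs.
From mathcomp Require Import all_boot.
From Stdlib Require Import FunctionalExtensionality ProofIrrelevance.
(* Re-import so that the field [compA] shadows ssrfun's lemma of that name. *)
Import Pilot.Defs.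
Set Implicit Arguments. Unset Strict Implicit. Unset Printing Implicit Defensive.

(** * Whiskering and cancellation in a 2-category *)

Section Boundaries.
Variable C : TwoCat.
Implicit Types (a b c : Cl C) (f g h : Ar C) (x y z : Ob C).

Lemma compA_idl' f x : tgt f = x -> compA (idA x) f = f.
Proof. by move<-; apply: compA_idl. Qed.

Lemma compA_idr' f x : src f = x -> compA f (idA x) = f.
Proof. by move<-; apply: compA_idr. Qed.

Lemma compA_assocr h g f : tgt f = src g -> tgt g = src h ->
  compA (compA h g) f = compA h (compA g f).
Proof. by move=> *; rewrite compA_assoc. Qed.

Lemma vcomp_idl' a f : cod2 a = f -> vcomp (id2 f) a = a.
Proof. by move<-; apply: vcomp_idl. Qed.

Lemma vcomp_idr' a f : dom2 a = f -> vcomp a (id2 f) = a.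
Proof. by move<-; apply: vcomp_idr. Qed.

Lemma hcomp_idl' a x : tgt (dom2 a) = x -> hcomp (id2 (idA x)) a = a.
Proof. by move<-; apply: hcomp_idl. Qed.

Lemma hcomp_idr' a x : src (dom2 a) = x -> hcomp a (id2 (idA x)) = a.
Proof. by move<-; apply: hcomp_idr. Qed.

Lemma vcomp_assocr c b a : cod2 a = dom2 b -> cod2 b = dom2 c ->
  vcomp (vcomp c b) a = vcomp c (vcomp b a).
Proof. by move=> *; rewrite vcomp_assoc. Qed.

End Boundaries.

Ltac bnd_step := first
  [ rewrite dom_id2 | rewrite cod_id2 | rewrite src_idA | rewrite tgt_idA
  | rewrite src_cod2 | rewrite tgt_cod2
  | match goal with
    | H : dom2 ?a = _ |- context [dom2 ?a] => rewrite H
    | H : cod2 ?a = _ |- context [cod2 ?a] => rewrite H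
    | H : src ?a = _ |- context [src ?a] => rewrite H
    | H : tgt ?a = _ |- context [tgt ?a] => rewrite H
    end
  | rewrite dom_vcomp; [| solve [bnd]]
  | rewrite cod_vcomp; [| solve [bnd]]
  | rewrite dom_hcomp; [| solve [bnd]]
  | rewrite cod_hcomp; [| solve [bnd]]
  | rewrite src_compA; [| solve [bnd]]
  | rewrite tgt_compA; [| solve [bnd]]
  | rewrite compA_idl'; [| solve [bnd]]
  | rewrite compA_idr'; [| solve [bnd]]
  | rewrite compA_assocr; [| solve [bnd] | solve [bnd]] ]
with bnd := repeat bnd_step; reflexivity.

Section Whiskering.
Variable C : TwoCat.
Implicit Types (a b c : Cl C) (f g h u v e : Ar C) (x y z : Ob C).

Lemma iso2_cancel_l a b b' : is_iso2 a -> cod2 b = dom2 a -> cod2 b' = dom2 a ->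
  vcomp a b = vcomp a b' -> b = b'.
Proof.
case=> c [h1 h2 h3 h4] e1 e2 E.
rewrite -(vcomp_idl' e1) -(vcomp_idl' e2) -h3.
by rewrite !vcomp_assocr ?E // ?e1 ?e2.
Qed.

Lemma iso2_cancel_r a b b' : is_iso2 a -> dom2 b = cod2 a -> dom2 b' = cod2 a ->
  vcomp b a = vcomp b' a -> b = b'.
Proof.
case=> c [h1 h2 h3 h4] e1 e2 E.
rewrite -(vcomp_idr' e1) -(vcomp_idr' e2) -h4.
by rewrite -!vcomp_assocr ?E // ?e1 ?e2 ?h2.
Qed.

Lemma iso2_inv a : is_iso2 a -> exists c, [/\ dom2 c = cod2 a, cod2 c = dom2 a,
   vcomp c a = id2 (dom2 a) & vcomp a c = id2 (cod2 a)].
Proof. by case=> c [h1 h2 h3 h4]; exists c. Qed.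

Lemma whisk_l_vcomp f b a : cod2 a = dom2 b -> tgt (dom2 a) = src f ->
  hcomp (id2 f) (vcomp b a) = vcomp (hcomp (id2 f) b) (hcomp (id2 f) a).
Proof.
move=> h1 h2; rewrite interchange ?dom_id2 ?cod_id2 //.
by rewrite vcomp_idl' ?cod_id2.
Qed.

Lemma whisk_r_vcomp f b a : cod2 a = dom2 b -> tgt f = src (dom2 a) ->
  hcomp (vcomp b a) (id2 f) = vcomp (hcomp b (id2 f)) (hcomp a (id2 f)).
Proof.
move=> h1 h2; rewrite interchange ?dom_id2 ?cod_id2 //.
by rewrite vcomp_idl' ?cod_id2.
Qed.

Lemma whisk_l_compA g f a : tgt (dom2 a) = src f -> tgt f = src g ->
  hcomp (id2 g) (hcomp (id2 f) a) = hcomp (id2 (compA g f)) a.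
Proof. by move=> h1 h2; rewrite hcomp_assoc ?dom_id2 // hcomp_id2. Qed.

Lemma whisk_r_compA a g f : tgt f = src g -> tgt g = src (dom2 a) ->
  hcomp (hcomp a (id2 g)) (id2 f) = hcomp a (id2 (compA g f)).
Proof. by move=> h1 h2; rewrite -hcomp_assoc ?dom_id2 // hcomp_id2. Qed.

Lemma whisk_lr g a f : tgt f = src (dom2 a) -> tgt (dom2 a) = src g ->
  hcomp (hcomp (id2 g) a) (id2 f) = hcomp (id2 g) (hcomp a (id2 f)).
Proof. by move=> h1 h2; rewrite hcomp_assoc ?dom_id2. Qed.

Lemma whisk_exchange b a f f' g g' :
  dom2 a = f -> cod2 a = f' -> dom2 b = g -> cod2 b = g' -> tgt f = src g ->
  vcomp (hcomp b (id2 f')) (hcomp (id2 g) a)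
  = vcomp (hcomp (id2 g') a) (hcomp b (id2 f)).
Proof.
move=> da ca db cb t.
rewrite !interchange; try bnd.
by rewrite vcomp_idr' // vcomp_idl' // vcomp_idl' // vcomp_idr'.
Qed.

Lemma whisk_r_natural al u v e eps y :
  dom2 al = u -> cod2 al = v -> src u = y -> src v = y ->
  dom2 eps = e -> cod2 eps = idA y -> tgt e = y -> src e = y ->
  vcomp (hcomp (id2 v) eps) (hcomp al (id2 e)) = vcomp al (hcomp (id2 u) eps).
Proof.
move=> da ca su sv de ce te se.
transitivity (hcomp al eps).
  rewrite interchange; try bnd.
  by rewrite vcomp_idl' // vcomp_idr'.
rewrite -[in RHS](@hcomp_idr' _ al y); last by bnd.
rewrite interchange; try bnd.
by rewrite vcomp_idr' // vcomp_idl'.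
Qed.

End Whiskering.

(* Reversing 1-cells exchanges left and right whiskering. *)
Definition op1 (C : TwoCat) : TwoCat.
refine (@Build_TwoCat (Ob C) (Ar C) (Cl C) (@tgt C) (@src C) (@idA C)
  (fun g f => compA f g) (@dom2 C) (@cod2 C) (@id2 C) (@vcomp C)
  (fun b a => hcomp a b) _ _ _ _ _ _ _ _ _ _ _ _ _ _ _ _ _ _ _ _ _ _ _).
- exact: tgt_idA.
- exact: src_idA.
- by move=> g f h; rewrite tgt_compA.
- by move=> g f h; rewrite src_compA.
- exact: compA_idr.
- exact: compA_idl.
- by move=> h g f h1 h2; rewrite compA_assoc.
- exact: tgt_cod2.
- exact: src_cod2.
- exact: dom_id2.
- exact: cod_id2.
- exact: dom_vcomp.
- exact: cod_vcomp.
- exact: vcomp_idl.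
- exact: vcomp_idr.
- exact: vcomp_assoc.
- by move=> b a h; rewrite dom_hcomp.
- by move=> b a h; rewrite cod_hcomp.
- by move=> g f h; rewrite hcomp_id2.
- exact: hcomp_idr.
- exact: hcomp_idl.
- by move=> c b a h1 h2; rewrite hcomp_assoc.
- by move=> b' b a' a h1 h2 h3; rewrite interchange.
Defined.

Definition is_equivA (C : TwoCat) (f : Ar C) := exists g, [/\ src g = tgt f, tgt g = src f,
   (exists e, [/\ dom2 e = compA f g, cod2 e = idA (tgt f) & is_iso2 e])
 & (exists e, [/\ dom2 e = compA g f, cod2 e = idA (src f) & is_iso2 e])].

Section WhiskerEquivalence.
Variable C : TwoCat.
Hypothesis iso2C : forall a : Cl C, is_iso2 a.
Implicit Types (a b c : Cl C) (f g h u v e : Ar C) (x y z : Ob C).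

Lemma whisk_r_faithful f g eps al al' u v x y z :
  src f = x -> tgt f = y -> src g = y -> tgt g = x ->
  dom2 eps = compA f g -> cod2 eps = idA y ->
  src u = y -> tgt u = z -> src v = y -> tgt v = z ->
  dom2 al = u -> cod2 al = v -> dom2 al' = u -> cod2 al' = v ->
  hcomp al (id2 f) = hcomp al' (id2 f) -> al = al'.
Proof.
move=> sf tf sg tg de ce su tu sv tv da ca da' ca' E.
apply: (@iso2_cancel_r _ (hcomp (id2 u) eps)); try bnd; first exact: iso2C.
rewrite -(@whisk_r_natural _ al u v (compA f g) eps y); try bnd.
rewrite -(@whisk_r_natural _ al' u v (compA f g) eps y); try bnd.
by rewrite -!(@whisk_r_compA _ _ f g) ?E; try bnd.
Qed.

Lemma whisk_r_full f g eps eta be u v x y z :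
  src f = x -> tgt f = y -> src g = y -> tgt g = x ->
  dom2 eps = compA f g -> cod2 eps = idA y ->
  dom2 eta = compA g f -> cod2 eta = idA x ->
  src u = y -> tgt u = z -> src v = y -> tgt v = z ->
  dom2 be = compA u f -> cod2 be = compA v f ->
  exists al, [/\ dom2 al = u, cod2 al = v & hcomp al (id2 f) = be].
Proof.
move=> sf tf sg tg de ce dh ch su tu sv tv db cb.
have [eps' [de' ce' eps'K epsK]] := iso2_inv (iso2C (hcomp (id2 u) eps)).
set al := vcomp (hcomp (id2 v) eps) (vcomp (hcomp be (id2 g)) eps').
have dal : dom2 al = u by rewrite /al; bnd.
have cal : cod2 al = v by rewrite /al; bnd.
exists al; split => //.
apply: (@whisk_r_faithful g f eta _ _ (compA u f) (compA v f) y x z); try bnd.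
rewrite (@whisk_r_compA _ _ f g); try bnd.
apply: (@iso2_cancel_l _ (hcomp (id2 v) eps)); try bnd; first exact: iso2C.
rewrite (@whisk_r_natural _ al u v (compA f g) eps y); try bnd.
rewrite /al !vcomp_assocr ?eps'K; try bnd.
by rewrite vcomp_idr'; bnd.
Qed.

End WhiskerEquivalence.

Section WhiskerEquivalenceLeft.
Variable C : TwoCat.
Hypothesis iso2C : forall a : Cl C, is_iso2 a.
Implicit Types (a b c : Cl C) (f g h u v e : Ar C) (x y z : Ob C).

Lemma whisk_l_faithful f g eps al al' u v x y z :
  tgt f = x -> src f = y -> tgt g = y -> src g = x ->
  dom2 eps = compA g f -> cod2 eps = idA y ->
  tgt u = y -> src u = z -> tgt v = y -> src v = z ->
  dom2 al = u -> cod2 al = v -> dom2 al' = u -> cod2 al' = v ->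
  hcomp (id2 f) al = hcomp (id2 f) al' -> al = al'.
Proof. exact: (@whisk_r_faithful (op1 C) iso2C f g eps al al' u v x y z). Qed.

Lemma whisk_l_full f g eps eta be u v x y z :
  tgt f = x -> src f = y -> tgt g = y -> src g = x ->
  dom2 eps = compA g f -> cod2 eps = idA y ->
  dom2 eta = compA f g -> cod2 eta = idA x ->
  tgt u = y -> src u = z -> tgt v = y -> src v = z ->
  dom2 be = compA f u -> cod2 be = compA f v ->
  exists al, [/\ dom2 al = u, cod2 al = v & hcomp (id2 f) al = be].
Proof. exact: (@whisk_r_full (op1 C) iso2C f g eps eta be u v x y z). Qed.

End WhiskerEquivalenceLeft.
(** * Cocycles on tetrahedra and on 4-simplices *)

Definition cocycle (C : TwoCat) (fij fkl : Ar C) (ajkl aijl aijk aikl : Cl C) :=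
  vcomp (hcomp ajkl (id2 fij)) aijl = vcomp (hcomp (id2 fkl) aijk) aikl.

Section Tetrahedron.
Variable C : TwoCat.
Hypothesis iso2C : forall a : Cl C, is_iso2 a.
Variables (x0 x1 x2 x3 : Ob C) (f01 f02 f03 f12 f13 f23 : Ar C).
Hypotheses (s01 : src f01 = x0) (t01 : tgt f01 = x1) (s02 : src f02 = x0) (t02 : tgt f02 = x2)
  (s03 : src f03 = x0) (t03 : tgt f03 = x3) (s12 : src f12 = x1) (t12 : tgt f12 = x2)
  (s13 : src f13 = x1) (t13 : tgt f13 = x3) (s23 : src f23 = x2) (t23 : tgt f23 = x3).
Implicit Types (a b c : Cl C).

Lemma cocycle_solve023 a012 a013 a123 :
  dom2 a012 = f02 -> cod2 a012 = compA f12 f01 ->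
  dom2 a013 = f03 -> cod2 a013 = compA f13 f01 ->
  dom2 a123 = f13 -> cod2 a123 = compA f23 f12 ->
  exists a023, [/\ dom2 a023 = f03, cod2 a023 = compA f23 f02 &
     cocycle f01 f23 a123 a013 a012 a023].
Proof using All.
move=> d012 c012 d013 c013 d123 c123.
have [w' [dw cw e1 e2]] := iso2_inv (iso2C (hcomp (id2 f23) a012)).
exists (vcomp w' (vcomp (hcomp a123 (id2 f01)) a013)); split; try bnd.
rewrite /cocycle -vcomp_assocr; try bnd.
rewrite e2 vcomp_idl' //; bnd.
Qed.

Lemma cocycle_unique023 a012 a013 a123 a023 a023' :
  dom2 a012 = f02 -> cod2 a012 = compA f12 f01 ->
  dom2 a023 = f03 -> cod2 a023 = compA f23 f02 ->
  dom2 a023' = f03 -> cod2 a023' = compA f23 f02 ->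
  cocycle f01 f23 a123 a013 a012 a023 -> cocycle f01 f23 a123 a013 a012 a023' -> a023 = a023'.
Proof using All.
move=> d012 c012 d c d' c' E E'.
apply: (@iso2_cancel_l _ (hcomp (id2 f23) a012)); try bnd; first exact: iso2C.
by rewrite -E -E'.
Qed.

Lemma cocycle_solve013 a012 a023 a123 :
  dom2 a012 = f02 -> cod2 a012 = compA f12 f01 ->
  dom2 a023 = f03 -> cod2 a023 = compA f23 f02 ->
  dom2 a123 = f13 -> cod2 a123 = compA f23 f12 ->
  exists a013, [/\ dom2 a013 = f03, cod2 a013 = compA f13 f01 &
     cocycle f01 f23 a123 a013 a012 a023].
Proof using All.
move=> d012 c012 d023 c023 d123 c123.
have [w' [dw cw e1 e2]] := iso2_inv (iso2C (hcomp a123 (id2 f01))).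
exists (vcomp w' (vcomp (hcomp (id2 f23) a012) a023)); split; try bnd.
rewrite /cocycle -vcomp_assocr; try bnd.
rewrite e2 vcomp_idl' //; bnd.
Qed.

Lemma cocycle_unique013 a012 a013 a013' a123 a023 :
  dom2 a123 = f13 -> cod2 a123 = compA f23 f12 ->
  dom2 a013 = f03 -> cod2 a013 = compA f13 f01 ->
  dom2 a013' = f03 -> cod2 a013' = compA f13 f01 ->
  cocycle f01 f23 a123 a013 a012 a023 -> cocycle f01 f23 a123 a013' a012 a023 -> a013 = a013'.
Proof using All.
move=> d123 c123 d c d' c' E E'.
apply: (@iso2_cancel_l _ (hcomp a123 (id2 f01))); try bnd; first exact: iso2C.
by rewrite /cocycle in E E'; rewrite E E'.
Qed.

Lemma cocycle_solve123 a012 a013 a023 : is_equivA f01 ->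
  dom2 a012 = f02 -> cod2 a012 = compA f12 f01 ->
  dom2 a013 = f03 -> cod2 a013 = compA f13 f01 ->
  dom2 a023 = f03 -> cod2 a023 = compA f23 f02 ->
  exists a123, [/\ dom2 a123 = f13, cod2 a123 = compA f23 f12 &
     cocycle f01 f23 a123 a013 a012 a023].
Proof using All.
move=> [g [sg tg [eps [de ce _]] [eta [dh ch _]]]] d012 c012 d013 c013 d023 c023.
rewrite t01 in sg ce; rewrite s01 in tg ch.
have [b' [db cb e1 e2]] := iso2_inv (iso2C a013).
have [al [dal cal E]] := @whisk_r_full C iso2C f01 g eps eta
   (vcomp (vcomp (hcomp (id2 f23) a012) a023) b') f13 (compA f23 f12) x0 x1 x3
   ltac:(bnd) ltac:(bnd) ltac:(bnd) ltac:(bnd) ltac:(bnd) ltac:(bnd) ltac:(bnd) ltac:(bnd)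
   ltac:(bnd) ltac:(bnd) ltac:(bnd) ltac:(bnd) ltac:(bnd) ltac:(bnd).
exists al; split => //.
rewrite /cocycle E vcomp_assocr; try bnd.
rewrite e1 vcomp_idr' //; bnd.
Qed.

Lemma cocycle_unique123 a012 a013 a023 a123 a123' : is_equivA f01 ->
  dom2 a013 = f03 -> cod2 a013 = compA f13 f01 ->
  dom2 a123 = f13 -> cod2 a123 = compA f23 f12 ->
  dom2 a123' = f13 -> cod2 a123' = compA f23 f12 ->
  cocycle f01 f23 a123 a013 a012 a023 -> cocycle f01 f23 a123' a013 a012 a023 -> a123 = a123'.
Proof using All.
move=> [g [sg tg [eps [de ce _]] [eta [dh ch _]]]] d013 c013 d c d' c' E E'.
rewrite t01 in sg ce; rewrite s01 in tg ch.
apply: (@whisk_r_faithful C iso2C f01 g eps a123 a123' f13 (compA f23 f12) x0 x1 x3); try bnd.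
apply: (@iso2_cancel_r _ a013); try bnd; first exact: iso2C.
by rewrite /cocycle in E E'; rewrite E E'.
Qed.

Lemma cocycle_solve012 a013 a023 a123 : is_equivA f23 ->
  dom2 a013 = f03 -> cod2 a013 = compA f13 f01 ->
  dom2 a023 = f03 -> cod2 a023 = compA f23 f02 ->
  dom2 a123 = f13 -> cod2 a123 = compA f23 f12 ->
  exists a012, [/\ dom2 a012 = f02, cod2 a012 = compA f12 f01 &
     cocycle f01 f23 a123 a013 a012 a023].
Proof using All.
move=> [g [sg tg [eps [de ce _]] [eta [dh ch _]]]] d013 c013 d023 c023 d123 c123.
rewrite t23 in sg ce; rewrite s23 in tg ch.
have [b' [db cb e1 e2]] := iso2_inv (iso2C a023).
have [al [dal cal E]] := @whisk_l_full C iso2C f23 g eta eps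
   (vcomp (vcomp (hcomp a123 (id2 f01)) a013) b') f02 (compA f12 f01) x3 x2 x0
   ltac:(bnd) ltac:(bnd) ltac:(bnd) ltac:(bnd) ltac:(bnd) ltac:(bnd) ltac:(bnd) ltac:(bnd)
   ltac:(bnd) ltac:(bnd) ltac:(bnd) ltac:(bnd) ltac:(bnd) ltac:(bnd).
exists al; split => //.
rewrite /cocycle E vcomp_assocr; try bnd.
rewrite e1 vcomp_idr' //; bnd.
Qed.

Lemma cocycle_unique012 a012 a012' a013 a023 a123 : is_equivA f23 ->
  dom2 a023 = f03 -> cod2 a023 = compA f23 f02 ->
  dom2 a012 = f02 -> cod2 a012 = compA f12 f01 ->
  dom2 a012' = f02 -> cod2 a012' = compA f12 f01 ->
  cocycle f01 f23 a123 a013 a012 a023 -> cocycle f01 f23 a123 a013 a012' a023 -> a012 = a012'.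
Proof using All.
move=> [g [sg tg [eps [de ce _]] [eta [dh ch _]]]] d023 c023 d c d' c' E E'.
rewrite t23 in sg ce; rewrite s23 in tg ch.
apply: (@whisk_l_faithful C iso2C f23 g eta a012 a012' f02 (compA f12 f01) x3 x2 x0); try bnd.
apply: (@iso2_cancel_r _ a023); try bnd; first exact: iso2C.
by rewrite /cocycle in E E'; rewrite -E -E'.
Qed.
End Tetrahedron.


(* The 2-skeleton of an [n]-simplex of the nerve: objects [x_i], arrows
   [f_ij : x_i -> x_j] and 2-cells [a_ijl : f_il => f_jl f_ij]; only the entries
   at strictly increasing indices are relevant. *)
Record sdata (C : TwoCat) n := {
  dob : 'I_n.+1 -> Ob C;
  dar : 'I_n.+1 -> 'I_n.+1 -> Ar C;
  dcl : 'I_n.+1 -> 'I_n.+1 -> 'I_n.+1 -> Cl C }.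

Section SimplexData.
Variables (C : TwoCat) (n : nat).
Implicit Types (D : sdata C n) (i j k l : 'I_n.+1).

Definition ar_typed D i j := src (dar D i j) = dob D i /\ tgt (dar D i j) = dob D j.

Definition cl_typed D i j k :=
  dom2 (dcl D i j k) = dar D i k /\ cod2 (dcl D i j k) = compA (dar D j k) (dar D i j).

Definition cocycle_at D i j k l :=
  cocycle (dar D i j) (dar D k l) (dcl D j k l) (dcl D i j l) (dcl D i j k) (dcl D i k l).

Definition coherent_on D (P : pred 'I_n.+1) :=
  [/\ forall i j, P i -> P j -> i < j -> ar_typed D i j,
      forall i j k, P i -> P j -> P k -> i < j -> j < k -> cl_typed D i j k &
      forall i j k l, P i -> P j -> P k -> P l -> i < j -> j < k -> k < l ->
        cocycle_at D i j k l].

End SimplexData.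

Definition p0 : 'I_5 := @Ordinal 5 0 isT.
Definition p1 : 'I_5 := @Ordinal 5 1 isT.
Definition p2 : 'I_5 := @Ordinal 5 2 isT.
Definition p3 : 'I_5 := @Ordinal 5 3 isT.
Definition p4 : 'I_5 := @Ordinal 5 4 isT.

Ltac fixord := repeat match goal with
  | h : is_true (?a < ?b) |- context [@Ordinal ?b ?a ?h] => rewrite (bool_irrelevance h isT)
  end.

Lemma chain4_I5 (P : 'I_5 -> 'I_5 -> 'I_5 -> 'I_5 -> Prop) :
  P p0 p1 p2 p3 -> P p0 p1 p2 p4 -> P p0 p1 p3 p4 -> P p0 p2 p3 p4 -> P p1 p2 p3 p4 ->
  forall i j l o : 'I_5, i < j -> j < l -> l < o -> P i j l o.
Proof.
move=> H1 H2 H3 H4 H5 [[|[|[|[|[|i]]]]] hi] [[|[|[|[|[|j]]]]] hj] [[|[|[|[|[|l]]]]] hl]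
  [[|[|[|[|[|o]]]]] ho] //= _ _ _; by fixord.
Qed.

Section Pentagon.
Variables (C : TwoCat) (D : sdata C 4).
Hypothesis iso2C : forall a : Cl C, is_iso2 a.
Hypotheses (arD : forall i j : 'I_5, i < j -> ar_typed D i j)
  (clD : forall i j l : 'I_5, i < j -> j < l -> cl_typed D i j l).

Local Notation f01 := (dar D p0 p1). Local Notation f02 := (dar D p0 p2).
Local Notation f03 := (dar D p0 p3). Local Notation f04 := (dar D p0 p4).
Local Notation f12 := (dar D p1 p2). Local Notation f13 := (dar D p1 p3).
Local Notation f14 := (dar D p1 p4). Local Notation f23 := (dar D p2 p3).
Local Notation f24 := (dar D p2 p4). Local Notation f34 := (dar D p3 p4).
Local Notation a012 := (dcl D p0 p1 p2). Local Notation a013 := (dcl D p0 p1 p3).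
Local Notation a014 := (dcl D p0 p1 p4). Local Notation a023 := (dcl D p0 p2 p3).
Local Notation a024 := (dcl D p0 p2 p4). Local Notation a034 := (dcl D p0 p3 p4).
Local Notation a123 := (dcl D p1 p2 p3). Local Notation a124 := (dcl D p1 p2 p4).
Local Notation a134 := (dcl D p1 p3 p4). Local Notation a234 := (dcl D p2 p3 p4).

Let s01 := proj1 (@arD p0 p1 isT). Let t01 := proj2 (@arD p0 p1 isT).
Let s02 := proj1 (@arD p0 p2 isT). Let t02 := proj2 (@arD p0 p2 isT).
Let s03 := proj1 (@arD p0 p3 isT). Let t03 := proj2 (@arD p0 p3 isT).
Let s04 := proj1 (@arD p0 p4 isT). Let t04 := proj2 (@arD p0 p4 isT).
Let s12 := proj1 (@arD p1 p2 isT). Let t12 := proj2 (@arD p1 p2 isT).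
Let s13 := proj1 (@arD p1 p3 isT). Let t13 := proj2 (@arD p1 p3 isT).
Let s14 := proj1 (@arD p1 p4 isT). Let t14 := proj2 (@arD p1 p4 isT).
Let s23 := proj1 (@arD p2 p3 isT). Let t23 := proj2 (@arD p2 p3 isT).
Let s24 := proj1 (@arD p2 p4 isT). Let t24 := proj2 (@arD p2 p4 isT).
Let s34 := proj1 (@arD p3 p4 isT). Let t34 := proj2 (@arD p3 p4 isT).
Let d012 := proj1 (@clD p0 p1 p2 isT isT). Let c012 := proj2 (@clD p0 p1 p2 isT isT).
Let d013 := proj1 (@clD p0 p1 p3 isT isT). Let c013 := proj2 (@clD p0 p1 p3 isT isT).
Let d014 := proj1 (@clD p0 p1 p4 isT isT). Let c014 := proj2 (@clD p0 p1 p4 isT isT).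
Let d023 := proj1 (@clD p0 p2 p3 isT isT). Let c023 := proj2 (@clD p0 p2 p3 isT isT).
Let d024 := proj1 (@clD p0 p2 p4 isT isT). Let c024 := proj2 (@clD p0 p2 p4 isT isT).
Let d034 := proj1 (@clD p0 p3 p4 isT isT). Let c034 := proj2 (@clD p0 p3 p4 isT isT).
Let d123 := proj1 (@clD p1 p2 p3 isT isT). Let c123 := proj2 (@clD p1 p2 p3 isT isT).
Let d124 := proj1 (@clD p1 p2 p4 isT isT). Let c124 := proj2 (@clD p1 p2 p4 isT isT).
Let d134 := proj1 (@clD p1 p3 p4 isT isT). Let c134 := proj2 (@clD p1 p3 p4 isT isT).
Let d234 := proj1 (@clD p2 p3 p4 isT isT). Let c234 := proj2 (@clD p2 p3 p4 isT isT).

(* Ten 2-cells [f04 => f34 f23 f12 f01] around the pentagon: consecutive ones are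
   equal by the interchange law or by one of the five cocycle conditions, and each
   condition can be recovered from its equation (for 0123 and 1234 by cancelling
   the whiskering with the equivalence [f34], resp. [f01]). *)
Let Q1 := vcomp (hcomp a234 (id2 (compA f12 f01))) (vcomp (hcomp a124 (id2 f01)) a014).
Let Q2 := vcomp (hcomp a234 (id2 (compA f12 f01))) (vcomp (hcomp (id2 f24) a012) a024).
Let Q3 := vcomp (hcomp (id2 (compA f34 f23)) a012) (vcomp (hcomp a234 (id2 f02)) a024).
Let Q4 := vcomp (hcomp (id2 (compA f34 f23)) a012) (vcomp (hcomp (id2 f34) a023) a034).
Let Q5 := vcomp (hcomp (id2 f34) (vcomp (hcomp (id2 f23) a012) a023)) a034.
Let Q6 := vcomp (hcomp (id2 f34) (vcomp (hcomp a123 (id2 f01)) a013)) a034.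
Let Q7 := vcomp (hcomp (hcomp (id2 f34) a123) (id2 f01)) (vcomp (hcomp (id2 f34) a013) a034).
Let Q8 := vcomp (hcomp (hcomp (id2 f34) a123) (id2 f01)) (vcomp (hcomp a134 (id2 f01)) a014).
Let Q9 := vcomp (hcomp (vcomp (hcomp (id2 f34) a123) a134) (id2 f01)) a014.
Let Q10 := vcomp (hcomp (vcomp (hcomp a234 (id2 f12)) a124) (id2 f01)) a014.

Let Q2_Q3 : Q2 = Q3.
Proof.
rewrite /Q2 /Q3 -!vcomp_assocr; try bnd.
by rewrite (@whisk_exchange C a234 a012 f02 (compA f12 f01) f24 (compA f34 f23)); try bnd.
Qed.

Let Q4_Q5 : Q4 = Q5.
Proof.
rewrite /Q4 /Q5 whisk_l_vcomp; try bnd.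
by rewrite whisk_l_compA ?vcomp_assocr; try bnd.
Qed.

Let Q6_Q7 : Q6 = Q7.
Proof.
rewrite /Q6 /Q7 whisk_l_vcomp; try bnd.
by rewrite whisk_lr ?vcomp_assocr; try bnd.
Qed.

Let Q8_Q9 : Q8 = Q9.
Proof. by rewrite /Q8 /Q9 whisk_r_vcomp ?vcomp_assocr; try bnd. Qed.

Let Q10_Q1 : Q10 = Q1.
Proof.
rewrite /Q10 /Q1 whisk_r_vcomp; try bnd.
by rewrite whisk_r_compA ?vcomp_assocr; try bnd.
Qed.

Let cocycle0124_iff : cocycle_at D p0 p1 p2 p4 <-> Q1 = Q2.
Proof.
split; first by rewrite /Q1 /Q2 => ->.
by apply: (@iso2_cancel_l _ (hcomp a234 (id2 (compA f12 f01)))); try bnd.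
Qed.

Let cocycle0234_iff : cocycle_at D p0 p2 p3 p4 <-> Q3 = Q4.
Proof.
split; first by rewrite /Q3 /Q4 => ->.
by apply: (@iso2_cancel_l _ (hcomp (id2 (compA f34 f23)) a012)); try bnd.
Qed.

Let cocycle0134_iff : cocycle_at D p0 p1 p3 p4 <-> Q7 = Q8.
Proof.
split; first by rewrite /Q7 /Q8 => ->.
by move=> E; symmetry; apply: (@iso2_cancel_l _ (hcomp (hcomp (id2 f34) a123) (id2 f01)));
  try bnd.
Qed.

Let Q5_Q6 : cocycle_at D p0 p1 p2 p3 -> Q5 = Q6.
Proof. by rewrite /Q5 /Q6 => ->. Qed.

Let cocycle0123_of : is_equivA f34 -> Q5 = Q6 -> cocycle_at D p0 p1 p2 p3.
Proof.
move=> [g [sg tg [eps [de ce _]] [eta [dh ch _]]]] E; symmetry.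
apply: (@whisk_l_faithful C iso2C f34 g eta _ _ f03 (compA f23 (compA f12 f01))
  (dob D p4) (dob D p3) (dob D p0)); try bnd.
by apply: (@iso2_cancel_r _ a034); try bnd.
Qed.

Let Q9_Q10 : cocycle_at D p1 p2 p3 p4 -> Q9 = Q10.
Proof. by rewrite /Q9 /Q10 => ->. Qed.

Let cocycle1234_of : is_equivA f01 -> Q9 = Q10 -> cocycle_at D p1 p2 p3 p4.
Proof.
move=> [g [sg tg [eps [de ce _]] [eta [dh ch _]]]] E; symmetry.
apply: (@whisk_r_faithful C iso2C f01 g eps _ _ f14 (compA (compA f34 f23) f12)
  (dob D p0) (dob D p1) (dob D p4)); try bnd.
by apply: (@iso2_cancel_r _ a014); try bnd.
Qed.

Lemma pentagon_cocycle (k : 'I_5) : (0 < k < 4) \/ (forall f : Ar C, is_equivA f) ->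
  (forall i j l o : 'I_5, i < j -> j < l -> l < o -> k \in [:: i; j; l; o] ->
     cocycle_at D i j l o) ->
  forall i j l o : 'I_5, i < j -> j < l -> l < o -> cocycle_at D i j l o.
Proof.
case: k => [[|[|[|[|[|k]]]]] hk] // k_inner_or_equiv H; apply: chain4_I5; try by apply: H.
- have [//|equivC] := k_inner_or_equiv.
  apply: cocycle1234_of; first exact: equivC.
  rewrite -Q8_Q9 -(cocycle0134_iff.1 (H p0 p1 p3 p4 isT isT isT isT)) -Q6_Q7.
  rewrite -(Q5_Q6 (H p0 p1 p2 p3 isT isT isT isT)) -Q4_Q5.
  rewrite -(cocycle0234_iff.1 (H p0 p2 p3 p4 isT isT isT isT)) -Q2_Q3.
  by rewrite -(cocycle0124_iff.1 (H p0 p1 p2 p4 isT isT isT isT)) -Q10_Q1.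
- apply/cocycle0234_iff.
  rewrite -Q2_Q3 -(cocycle0124_iff.1 (H p0 p1 p2 p4 isT isT isT isT)) -Q10_Q1.
  rewrite -(Q9_Q10 (H p1 p2 p3 p4 isT isT isT isT)) -Q8_Q9.
  rewrite -(cocycle0134_iff.1 (H p0 p1 p3 p4 isT isT isT isT)) -Q6_Q7.
  by rewrite -(Q5_Q6 (H p0 p1 p2 p3 isT isT isT isT)) -Q4_Q5.
- apply/cocycle0134_iff.
  rewrite -Q6_Q7 -(Q5_Q6 (H p0 p1 p2 p3 isT isT isT isT)) -Q4_Q5.
  rewrite -(cocycle0234_iff.1 (H p0 p2 p3 p4 isT isT isT isT)) -Q2_Q3.
  rewrite -(cocycle0124_iff.1 (H p0 p1 p2 p4 isT isT isT isT)) -Q10_Q1.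
  by rewrite -(Q9_Q10 (H p1 p2 p3 p4 isT isT isT isT)) -Q8_Q9.
- apply/cocycle0124_iff.
  rewrite -Q10_Q1 -(Q9_Q10 (H p1 p2 p3 p4 isT isT isT isT)) -Q8_Q9.
  rewrite -(cocycle0134_iff.1 (H p0 p1 p3 p4 isT isT isT isT)) -Q6_Q7.
  rewrite -(Q5_Q6 (H p0 p1 p2 p3 isT isT isT isT)) -Q4_Q5.
  by rewrite -(cocycle0234_iff.1 (H p0 p2 p3 p4 isT isT isT isT)) -Q2_Q3.
- have [//|equivC] := k_inner_or_equiv.
  apply: cocycle0123_of; first exact: equivC.
  rewrite -Q4_Q5 -(cocycle0234_iff.1 (H p0 p2 p3 p4 isT isT isT isT)) -Q2_Q3.
  rewrite -(cocycle0124_iff.1 (H p0 p1 p2 p4 isT isT isT isT)) -Q10_Q1.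
  rewrite -(Q9_Q10 (H p1 p2 p3 p4 isT isT isT isT)) -Q8_Q9.
  by rewrite -(cocycle0134_iff.1 (H p0 p1 p3 p4 isT isT isT isT)) -Q6_Q7.
Qed.

End Pentagon.

(** * Simplices of the nerve and their 2-skeleta *)

Lemma mono_ext m n (t t' : mono m n) : (forall i, t i = t' i) -> t = t'.
Proof.
case: t => f hf; case: t' => f' hf' /= E.
have ? : f = f' by apply: functional_extensionality.
by subst f'; f_equal; apply: proof_irrelevance.
Qed.

Lemma ord_le_eq n (i j : 'I_n) : i <= j -> ~~ (i < j) -> i = j.
Proof. by move=> h1 h2; apply: val_inj; apply/eqP; rewrite eqn_leq h1 leqNgt h2. Qed.

Definition maxo n (i j : 'I_n) : 'I_n := if i <= j then j else i.

Lemma maxo_l n (i j : 'I_n) : i <= maxo i j.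
Proof. by rewrite /maxo; case: ifP. Qed.

Lemma maxo_r n (i j : 'I_n) : j <= maxo i j.
Proof. by rewrite /maxo; case: ifP => // /negbT; rewrite -ltnNge => /ltnW. Qed.

Lemma maxoE n (i j : 'I_n) : i <= j -> maxo i j = j.
Proof. by rewrite /maxo => ->. Qed.

Lemma maxo_in n (i j : 'I_n) : (maxo i j == i) || (maxo i j == j).
Proof. by rewrite /maxo; case: ifP; rewrite eqxx ?orbT. Qed.

Definition t0 : 'I_3 := @Ordinal 3 0 isT.
Definition t1 : 'I_3 := @Ordinal 3 1 isT.
Definition t2 : 'I_3 := @Ordinal 3 2 isT.
Definition q0 : 'I_4 := @Ordinal 4 0 isT.
Definition q1 : 'I_4 := @Ordinal 4 1 isT.
Definition q2 : 'I_4 := @Ordinal 4 2 isT.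
Definition q3 : 'I_4 := @Ordinal 4 3 isT.

Section Simplices.
Variable n : nat.
Implicit Types (i j k l : 'I_n.+1).

(* The 2-simplex [(i, j, l)] and the 3-simplex [(i, j, l, o)] of Delta^n; taking
   running maxima makes them monotone without any order hypothesis. *)
Definition trif i j l (a : 'I_3) : 'I_n.+1 :=
  match val a with 0 => i | 1 => maxo i j | _ => maxo (maxo i j) l end.

Lemma trif_mono i j l (a b : 'I_3) : a <= b -> trif i j l a <= trif i j l b.
Proof.
case: a => [[|[|[|a]]] ha] //; case: b => [[|[|[|b]]] hb] //= _; rewrite /trif /=;
  by rewrite ?leqnn ?maxo_l ?maxo_r // (leq_trans (maxo_l i j) (maxo_l _ l)).
Qed.

Definition tri i j l : mono 2 n := exist _ (trif i j l) (@trif_mono i j l).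

Definition tetf i j l o (a : 'I_4) : 'I_n.+1 :=
  match val a with 0 => i | 1 => maxo i j | 2 => maxo (maxo i j) l
   | _ => maxo (maxo (maxo i j) l) o end.

Lemma tetf_mono i j l o (a b : 'I_4) : a <= b -> tetf i j l o a <= tetf i j l o b.
Proof.
have h1 := maxo_l i j; have h2 := maxo_l (maxo i j) l.
have h3 := maxo_l (maxo (maxo i j) l) o.
case: a => [[|[|[|[|a]]]] ha] //; case: b => [[|[|[|[|b]]]] hb] //= _; rewrite /tetf /=;
  by rewrite ?leqnn //; apply: (leq_trans _ h3) || apply: (leq_trans _ h2) || idtac;
     rewrite ?leqnn // ?(leq_trans h1 h2) //; apply: (leq_trans h1 h2).
Qed.

Definition tet i j l o : mono 3 n := exist _ (tetf i j l o) (@tetf_mono i j l o).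

Definition idm : mono n n :=
  exist (fun f : 'I_n.+1 -> 'I_n.+1 => forall i j, i <= j -> f i <= f j) id (fun i j h => h).

Definition cst m : mono m n :=
  exist (fun f : 'I_m.+1 -> 'I_n.+1 => forall a b : 'I_m.+1, a <= b -> f a <= f b)
    (fun _ => ord0) (fun a b _ => leqnn _).

Lemma mono_comp_id m (t : mono m n) : mono_comp idm t = t.
Proof. exact: mono_ext. Qed.

Lemma inHorn_comp k m p (t : mono m n) (s : mono p m) :
  inHorn k t -> inHorn k (mono_comp t s).
Proof.
case/existsP => j /andP [hj /forallP ht]; apply/existsP; exists j; rewrite hj /=.
by apply/forallP => a; apply: ht.
Qed.

Lemma inHorn_avoid k m (t : mono m n) v : v != k -> (forall a, t a != v) -> inHorn k t.
Proof. by move=> hv ht; apply/existsP; exists v; rewrite hv; apply/forallP. Qed.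

Lemma inHornP k m (t : mono m n) : inHorn k t -> exists2 v, v != k & forall a, t a != v.
Proof. by case/existsP => v /andP [hv /forallP ht]; exists v. Qed.

Lemma tri_mem i j l a : tri i j l a \in [:: i; j; l].
Proof.
case: a => [[|[|[|a]]] ha] //=; rewrite /trif /= !inE ?eqxx //.
  by case/orP: (maxo_in i j) => /eqP ->; rewrite eqxx ?orbT.
case/orP: (maxo_in (maxo i j) l) => /eqP ->; last by rewrite eqxx ?orbT.
by case/orP: (maxo_in i j) => /eqP ->; rewrite eqxx ?orbT.
Qed.

Lemma tet_mem i j l o a : tet i j l o a \in [:: i; j; l; o].
Proof.
case: a => [[|[|[|[|a]]]] ha] //=; rewrite /tetf /maxo /=;
  repeat case: ifP => _; by rewrite !inE eqxx ?orbT.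
Qed.

Lemma inHorn_tri k v i j l : v != k -> i != v -> j != v -> l != v -> inHorn k (tri i j l).
Proof.
move=> vk iv jv lv; apply: (inHorn_avoid vk) => a.
by have := tri_mem i j l a; rewrite !inE => /or3P [] /eqP ->.
Qed.

Lemma inHorn_tet k v i j l o : v != k -> i != v -> j != v -> l != v -> o != v ->
  inHorn k (tet i j l o).
Proof.
move=> vk iv jv lv ov; apply: (inHorn_avoid vk) => a.
by have := tet_mem i j l o a; rewrite !inE => /or4P [] /eqP ->.
Qed.

End Simplices.

Lemma mono_comp_tri n m (t : mono m n) (a b c : 'I_m.+1) : a <= b -> b <= c ->
  mono_comp t (tri a b c) = tri (t a) (t b) (t c).
Proof.
move=> hab hbc; apply: mono_ext => -[[|[|[|e]]] he] //=; rewrite /trif /=.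
- by rewrite !maxoE // monoP.
- by rewrite !maxoE // ?monoP // (leq_trans hab).
Qed.

Lemma tri_vals n (i j l : 'I_n.+1) : i <= j -> j <= l ->
  [/\ tri i j l t0 = i, tri i j l t1 = j & tri i j l t2 = l].
Proof. by move=> h1 h2; rewrite /= /trif /= !maxoE. Qed.

Lemma tet_vals n (i j l m : 'I_n.+1) : i <= j -> j <= l -> l <= m ->
  [/\ tet i j l m q0 = i, tet i j l m q1 = j, tet i j l m q2 = l & tet i j l m q3 = m].
Proof. by move=> h1 h2 h3; rewrite /= /tetf /= !maxoE. Qed.

Section NormalLax.
Variables (C : TwoCat) (n : nat).
Implicit Types (P Q : NLax C n) (i j l : 'I_n.+1).

Lemma NLax_ext P Q :
  (forall i, nob P i = nob Q i) ->
  (forall i j h, nar P i j h = nar Q i j h) ->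
  (forall i j l h1 h2, ncl P i j l h1 h2 = ncl Q i j l h1 h2) -> P = Q.
Proof.
case: P => o a c p1 p2 p3 p4 p5 p6 p7 p8 p9.
case: Q => o' a' c' q1 q2 q3 q4 q5 q6 q7 q8 q9 /= E1 E2 E3.
have ? : o = o' by apply: functional_extensionality.
subst o'.
have ? : a = a'.
  by do 3!(apply: functional_extensionality_dep => ?); apply: E2.
subst a'.
have ? : c = c'.
  by do 5!(apply: functional_extensionality_dep => ?); apply: E3.
by subst c'; f_equal; apply: proof_irrelevance.
Qed.

Lemma nar_cong P i j i' j' h h' : i = i' -> j = j' -> nar P i j h = nar P i' j' h'.
Proof. by move=> ??; subst; rewrite (bool_irrelevance h h'). Qed.

Lemma ncl_cong P i j l i' j' l' h1 h2 h1' h2' :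
  i = i' -> j = j' -> l = l' -> ncl P i j l h1 h2 = ncl P i' j' l' h1' h2'.
Proof.
by move=> ???; subst; rewrite (bool_irrelevance h1 h1') (bool_irrelevance h2 h2').
Qed.

Lemma NLax_ext_strict P Q : (forall i, nob P i = nob Q i) ->
  (forall i j h, i < j -> nar P i j h = nar Q i j h) ->
  (forall i j l h1 h2, i < j -> j < l -> ncl P i j l h1 h2 = ncl Q i j l h1 h2) -> P = Q.
Proof.
move=> E1 E2 E3.
have E2' i j h : nar P i j h = nar Q i j h.
  have [lt|ge] := boolP (i < j); first exact: E2.
  by have E := ord_le_eq h ge; subst j; rewrite !nar_id E1.
apply: NLax_ext => // i j l h1 h2.
have [l1|ge1] := boolP (i < j); last first.
  by have E := ord_le_eq h1 ge1; subst j; rewrite !ncl_idr E2'.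
have [l2|ge2] := boolP (j < l); last first.
  by have E := ord_le_eq h2 ge2; subst l; rewrite !ncl_idl E2'.
exact: E3.
Qed.

Lemma simplex_map_pull (z : forall m, mono m n -> NLax C m) :
  @simplex_map (nerve C) n z -> forall m t, z m t = pull t (z n (idm n)).
Proof. by move=> Hz m t; rewrite -{1}(mono_comp_id t) -Hz. Qed.

Lemma simplex_map_eq (z z' : forall m, mono m n -> NLax C m) :
  @simplex_map (nerve C) n z -> @simplex_map (nerve C) n z' ->
  z n (idm n) = z' n (idm n) -> forall m t, z m t = z' m t.
Proof.
by move=> Hz Hz' E m t; rewrite (simplex_map_pull Hz) (simplex_map_pull Hz') E.
Qed.

End NormalLax.

Section DataToNLax.
Variables (C : TwoCat) (n : nat).
Implicit Types (D : sdata C n) (P Q : pred 'I_n.+1) (i j k l : 'I_n.+1).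

(* Extension of the data to all chains [i <= j (<= l)], by identities on
   degenerate ones, as required of a normal lax functor. *)
Definition narN D i j := if i < j then dar D i j else idA (dob D i).
Definition nclN D i j k := if (i < j) && (j < k) then dcl D i j k else id2 (narN D i k).

Definition agree_on D D' P :=
  [/\ forall i, P i -> dob D i = dob D' i,
      forall i j, P i -> P j -> i < j -> dar D i j = dar D' i j &
      forall i j l, P i -> P j -> P l -> i < j -> j < l -> dcl D i j l = dcl D' i j l].

Lemma agree_sym D D' P : agree_on D D' P -> agree_on D' D P.
Proof. by case=> h1 h2 h3; split=> *; [rewrite h1 | rewrite h2 | rewrite h3]. Qed.

Lemma agree_trans D1 D2 D3 P : agree_on D1 D2 P -> agree_on D2 D3 P -> agree_on D1 D3 P.
Proof.
by case=> h1 h2 h3 [g1 g2 g3]; split=> *; [rewrite h1 ?g1 | rewrite h2 ?g2 | rewrite h3 ?g3].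
Qed.

Lemma agree_sub D D' P Q : (forall i, P i -> Q i) -> agree_on D D' Q -> agree_on D D' P.
Proof. by move=> PQ [h1 h2 h3]; split=> *; [apply: h1|apply: h2|apply: h3]; auto. Qed.

Lemma coherent_sub D P Q : (forall i, P i -> Q i) -> coherent_on D Q -> coherent_on D P.
Proof. by move=> PQ [h1 h2 h3]; split=> *; [apply: h1|apply: h2|apply: h3]; auto. Qed.

Lemma agree_narN D D' P i j : agree_on D D' P -> P i -> P j -> narN D i j = narN D' i j.
Proof. by case=> h1 h2 _ Pi Pj; rewrite /narN; case: ifP => lt; [apply: h2 | rewrite h1]. Qed.

Lemma agree_nclN D D' P i j l : agree_on D D' P -> P i -> P j -> P l ->
  nclN D i j l = nclN D' i j l.
Proof.
move=> A Pi Pj Pl; rewrite /nclN; case: ifP => [/andP [l1 l2]|_].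
  by case: A => _ _ h3; apply: h3.
by rewrite (agree_narN A Pi Pl).
Qed.

Section Coherent.
Variables (D : sdata C n) (P : pred 'I_n.+1).
Hypothesis cohD : coherent_on D P.

Lemma narN_id i : narN D i i = idA (dob D i).
Proof. by rewrite /narN ltnn. Qed.

Lemma nclN_idl i j : nclN D i j j = id2 (narN D i j).
Proof. by rewrite /nclN ltnn andbF. Qed.

Lemma nclN_idr i l : nclN D i i l = id2 (narN D i l).
Proof. by rewrite /nclN ltnn. Qed.

Lemma narN_typed i j : P i -> P j -> i <= j ->
  src (narN D i j) = dob D i /\ tgt (narN D i j) = dob D j.
Proof.
move=> Pi Pj; rewrite /narN; case: ifP => lt.
  by move=> _; case: cohD => arD _ _; apply: arD.
by move=> le; have E := ord_le_eq le (negbT lt); subst j; rewrite src_idA tgt_idA.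
Qed.

Lemma nclN_typed i j l : P i -> P j -> P l -> i <= j -> j <= l ->
  dom2 (nclN D i j l) = narN D i l /\
  cod2 (nclN D i j l) = compA (narN D j l) (narN D i j).
Proof.
move=> Pi Pj Pl hij hjl.
have [si ti] := narN_typed Pi Pj hij.
have [sj tj] := narN_typed Pj Pl hjl.
have [lij|] := ltnP i j; last first.
  move=> le; have E := ord_le_eq hij (negbT (leq_gtF le)); subst j.
  by rewrite nclN_idr narN_id dom_id2 cod_id2 compA_idr' // -si.
have [ljl|] := ltnP j l; last first.
  move=> le; have E := ord_le_eq hjl (negbT (leq_gtF le)); subst l.
  by rewrite nclN_idl narN_id dom_id2 cod_id2 compA_idl'.
rewrite /nclN lij ljl /= /narN lij ljl (ltn_trans lij ljl).
by case: cohD => _ clD _; apply: clD.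
Qed.

Lemma nclN_assoc i j k l : P i -> P j -> P k -> P l -> i <= j -> j <= k -> k <= l ->
  vcomp (hcomp (nclN D j k l) (id2 (narN D i j))) (nclN D i j l)
  = vcomp (hcomp (id2 (narN D k l)) (nclN D i j k)) (nclN D i k l).
Proof.
move=> Pi Pj Pk Pl hij hjk hkl.
have hik := leq_trans hij hjk; have hjl := leq_trans hjk hkl.
have hil := leq_trans hik hkl.
have [sij tij] := narN_typed Pi Pj hij; have [sjk tjk] := narN_typed Pj Pk hjk.
have [skl tkl] := narN_typed Pk Pl hkl; have [sik tik] := narN_typed Pi Pk hik.
have [sjl tjl] := narN_typed Pj Pl hjl; have [sil til] := narN_typed Pi Pl hil.
have [d1 c1] := nclN_typed Pj Pk Pl hjk hkl; have [d2 c2] := nclN_typed Pi Pj Pl hij hjl.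
have [d3 c3] := nclN_typed Pi Pj Pk hij hjk; have [d4 c4] := nclN_typed Pi Pk Pl hik hkl.
have [lij|] := ltnP i j; last first.
  move=> le; have E := ord_le_eq hij (negbT (leq_gtF le)); subst j.
  rewrite !nclN_idr narN_id hcomp_idr' ?vcomp_idr' ?hcomp_id2 ?vcomp_idl'; by bnd.
have [ljk|] := ltnP j k; last first.
  move=> le; have E := ord_le_eq hjk (negbT (leq_gtF le)); subst k.
  by rewrite nclN_idr nclN_idl.
have [lkl|] := ltnP k l; last first.
  move=> le; have E := ord_le_eq hkl (negbT (leq_gtF le)); subst l.
  rewrite !nclN_idl hcomp_id2 ?vcomp_idl' ?narN_id ?hcomp_idl' ?vcomp_idr'; by bnd.
case: cohD => _ _ /(_ i j k l Pi Pj Pk Pl lij ljk lkl).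
by rewrite /cocycle_at /cocycle /nclN /narN lij ljk lkl (ltn_trans lij ljk) (ltn_trans ljk lkl).
Qed.

End Coherent.

Lemma id2_natural (c : Cl C) u v : cod2 c = compA u v -> tgt v = src u ->
  vcomp (hcomp (id2 u) (id2 v)) c = vcomp c (id2 (dom2 c)).
Proof. by move=> h1 h2; rewrite hcomp_id2 // vcomp_idr -h1 vcomp_idl. Qed.

Definition im_mono m (t : mono m n) : pred 'I_n.+1 := fun i => [exists a, t a == i].

Lemma im_mono_in m (t : mono m n) a : im_mono t (t a).
Proof. by apply/existsP; exists a. Qed.

Definition nlax_of m D (t : mono m n) (cohD : coherent_on D (im_mono t)) : NLax C m.
Proof.
refine (@Build_NLax C m (fun a => dob D (t a)) (fun a b _ => narN D (t a) (t b))
  (fun a b c _ _ => nclN D (t a) (t b) (t c)) _ _ _ _ _ _ _ _ _).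
- by move=> a b h; case: (narN_typed cohD (im_mono_in t a) (im_mono_in t b) (monoP t h)).
- by move=> a b h; case: (narN_typed cohD (im_mono_in t a) (im_mono_in t b) (monoP t h)).
- by move=> a h; apply: narN_id.
- by move=> a b c h1 h2 h3; case: (nclN_typed cohD (im_mono_in t a) (im_mono_in t b)
    (im_mono_in t c) (monoP t h1) (monoP t h2)).
- by move=> a b c h1 h2; case: (nclN_typed cohD (im_mono_in t a) (im_mono_in t b)
    (im_mono_in t c) (monoP t h1) (monoP t h2)).
- by move=> a b h1 h2; apply: nclN_idl.
- by move=> a b h1 h2; apply: nclN_idr.
- move=> a b c h1 h2 h3.
  case: (nclN_typed cohD (im_mono_in t a) (im_mono_in t b) (im_mono_in t c)
    (monoP t h1) (monoP t h2)) => d e.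
  case: (narN_typed cohD (im_mono_in t a) (im_mono_in t b) (monoP t h1)) => _ tab.
  case: (narN_typed cohD (im_mono_in t b) (im_mono_in t c) (monoP t h2)) => sbc _.
  by rewrite id2_natural ?d //; bnd.
- move=> a b c d h1 h2 h3 h4 h5.
  exact: (nclN_assoc cohD (im_mono_in t a) (im_mono_in t b) (im_mono_in t c)
    (im_mono_in t d) (monoP t h1) (monoP t h2) (monoP t h3)).
Defined.

Lemma coherent_im D (cohD : coherent_on D predT) m (t : mono m n) : coherent_on D (im_mono t).
Proof. exact: coherent_sub cohD. Qed.

Lemma nlax_of_simplex_map D (cohD : coherent_on D predT) :
  @simplex_map (nerve C) n (fun m t => nlax_of (coherent_im cohD t)).
Proof. by move=> m p t s; apply: NLax_ext. Qed.

End DataToNLax.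

Section NLaxToData.
Variables (C : TwoCat) (n : nat) (P : NLax C n).
Implicit Types (i j l : 'I_n.+1).

Definition data_of : sdata C n :=
  {| dob := nob P;
     dar := fun i j => nar P i (maxo i j) (maxo_l i j);
     dcl := fun i j l => ncl P i (maxo i j) (maxo (maxo i j) l) (maxo_l _ _) (maxo_l _ _) |}.

Lemma data_of_ar i j h : dar data_of i j = nar P i j h.
Proof. by apply: nar_cong; rewrite ?maxoE. Qed.

Lemma data_of_cl i j l h1 h2 : dcl data_of i j l = ncl P i j l h1 h2.
Proof. by apply: ncl_cong; rewrite ?maxoE. Qed.

Lemma data_of_coherent : coherent_on data_of predT.
Proof.
split.
- move=> i j _ _ lt; rewrite /ar_typed (data_of_ar (ltnW lt)).
  by split; [apply: nar_src | apply: nar_tgt].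
- move=> i j l _ _ _ l1 l2; have l3 := ltn_trans l1 l2.
  rewrite /cl_typed (data_of_cl (ltnW l1) (ltnW l2)) (data_of_ar (ltnW l3)).
  rewrite (data_of_ar (ltnW l1)) (data_of_ar (ltnW l2)).
  by split; [apply: ncl_dom | apply: ncl_cod].
- move=> i j l o _ _ _ _ l1 l2 l3.
  have l4 := ltn_trans l1 l2; have l5 := ltn_trans l2 l3.
  rewrite /cocycle_at /cocycle (data_of_cl (ltnW l2) (ltnW l3)).
  rewrite (data_of_cl (ltnW l1) (ltnW l5)) (data_of_cl (ltnW l1) (ltnW l2)).
  rewrite (data_of_cl (ltnW l4) (ltnW l3)) (data_of_ar (ltnW l1)) (data_of_ar (ltnW l3)).
  exact: ncl_assoc.
Qed.

End NLaxToData.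

(** * Horns *)

Section HornPredicates.
Variables (C : TwoCat) (n : nat) (k : 'I_n.+1).

Definition face_coherent (D : sdata C n) := forall j, j != k -> coherent_on D (predC1 j).

Definition agree_faces (D D' : sdata C n) := forall j, j != k -> agree_on D D' (predC1 j).

Definition horn_fillable :=
  forall D, face_coherent D -> exists2 D', coherent_on D' predT & agree_faces D' D.

Definition horn_unique := forall D D', coherent_on D predT -> coherent_on D' predT ->
  agree_faces D D' -> agree_on D D' predT.

End HornPredicates.

Section HornToData.
Variables (C : TwoCat) (n : nat) (k : 'I_n.+1).
Variable x : forall m, mono m n -> NLax C m.
Arguments x : clear implicits.
Hypothesis hornx : @horn_map (nerve C) n k x.
Implicit Types (i j l : 'I_n.+1).

Lemma horn_pull m p (t : mono m n) (s : mono p m) :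
  inHorn k t -> x p (mono_comp t s) = pull s (x m t).
Proof. by move=> h; rewrite -(@hornx m p t s h). Qed.

Definition horn_data : sdata C n :=
  {| dob := fun i => nob (x 2 (tri i i i)) t0;
     dar := fun i j => nar (x 2 (tri i j j)) t0 t1 isT;
     dcl := fun i j l => ncl (x 2 (tri i j l)) t0 t1 t2 isT isT |}.

Lemma horn_ob m (t : mono m n) a : inHorn k t -> nob (x m t) a = dob horn_data (t a).
Proof. by move=> h; rewrite /= -(mono_comp_tri t (leqnn a) (leqnn a)) horn_pull. Qed.

Lemma horn_ar m (t : mono m n) a b h : inHorn k t ->
  nar (x m t) a b h = dar horn_data (t a) (t b).
Proof.
move=> ht; rewrite /= -(mono_comp_tri t h (leqnn b)) horn_pull //=.
by apply: nar_cong => //=; rewrite /trif /= maxoE.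
Qed.

Lemma horn_cl m (t : mono m n) a b c h1 h2 : inHorn k t ->
  ncl (x m t) a b c h1 h2 = dcl horn_data (t a) (t b) (t c).
Proof.
move=> ht; rewrite /= -(mono_comp_tri t h1 h2) horn_pull //=.
by apply: ncl_cong => //=; rewrite /trif /= !maxoE.
Qed.

Lemma horn_narN m (t : mono m n) a b h : inHorn k t ->
  nar (x m t) a b h = narN horn_data (t a) (t b).
Proof.
move=> ht; rewrite /narN; case: ifP => lt; first exact: horn_ar.
have E := ord_le_eq (monoP t h) (negbT lt).
by rewrite (horn_ar _ ht) -E -(horn_ar (leqnn a) ht) nar_id (horn_ob _ ht).
Qed.

Lemma horn_nclN m (t : mono m n) a b c h1 h2 : inHorn k t ->
  ncl (x m t) a b c h1 h2 = nclN horn_data (t a) (t b) (t c).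
Proof.
move=> ht; rewrite /nclN; case: ifP => [/andP [l1 l2]|nl]; first exact: horn_cl.
have [l1|ge1] := boolP (t a < t b).
  have E : t b = t c by apply: (ord_le_eq (monoP t h2)); rewrite l1 /= in nl; rewrite nl.
  rewrite (horn_cl _ _ ht) -E -(horn_cl h1 (leqnn b) ht) ncl_idl.
  by rewrite (horn_narN _ ht).
have E := ord_le_eq (monoP t h1) ge1.
rewrite (horn_cl _ _ ht) -E -(horn_cl (leqnn a) (leq_trans h1 h2) ht) ncl_idr.
by rewrite (horn_narN _ ht).
Qed.

Lemma horn_data_face_coherent : face_coherent k horn_data.
Proof.
move=> v vk; split.
- move=> i j iv jv lt; have ht := inHorn_tri vk iv jv jv.
  have [v0 v1 _] := tri_vals (ltnW lt) (leqnn j).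
  by split; rewrite /= ?nar_src ?nar_tgt (horn_ob _ ht) ?v0 ?v1.
- move=> i j l iv jv lv l1 l2; have ht := inHorn_tri vk iv jv lv.
  have [v0 v1 v2] := tri_vals (ltnW l1) (ltnW l2).
  rewrite /cl_typed /= (ncl_dom _ _ _ _ _ _ _ _ (isT : t0 <= t2)) ncl_cod.
  by rewrite !(horn_narN _ ht) v0 v1 v2 /narN l1 l2 (ltn_trans l1 l2).
- move=> i j l o iv jv lv ov l1 l2 l3; have ht := inHorn_tet vk iv jv lv ov.
  have [v0 v1 v2 v3] := tet_vals (ltnW l1) (ltnW l2) (ltnW l3).
  have := @ncl_assoc C 3 (x 3 (tet i j l o)) q0 q1 q2 q3 isT isT isT isT isT.
  rewrite !(horn_nclN _ _ ht) !(horn_narN _ ht) v0 v1 v2 v3 /nclN /narN.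
  by rewrite l1 l2 l3 (ltn_trans l1 l2) (ltn_trans l2 l3).
Qed.

Lemma horn_filler_of_data D (cohD : coherent_on D predT) : agree_faces k D horn_data ->
  exists z, @simplex_map (nerve C) n z /\ @extends (nerve C) n k z x.
Proof.
move=> A; exists (fun m t => nlax_of (coherent_im cohD t)).
split=> [|m t ht]; first exact: nlax_of_simplex_map.
have [v vk tv] := inHornP ht.
have At : agree_on D horn_data (im_mono t).
  by apply: agree_sub (A v vk) => _ /existsP [a /eqP <-]; apply: tv.
apply: NLax_ext => /=.
- by move=> a; rewrite (horn_ob _ ht); case: At => + _ _; apply; apply: im_mono_in.
- by move=> a b h; rewrite (horn_narN _ ht); apply: (agree_narN At); apply: im_mono_in.
- move=> a b c h1 h2; rewrite (horn_nclN _ _ ht).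
  by apply: (agree_nclN At); apply: im_mono_in.
Qed.

Lemma filler_agrees z : @simplex_map (nerve C) n z -> @extends (nerve C) n k z x ->
  agree_faces k (data_of (z n (idm n))) horn_data.
Proof.
move=> mapz extz v vk; have zE := simplex_map_pull mapz.
split=> [i iv | i j iv jv lt | i j l iv jv lv l1 l2] /=.
- by rewrite -(extz 2 _ (inHorn_tri vk iv iv iv)) [z 2 _]zE.
- rewrite -(extz 2 _ (inHorn_tri vk iv jv jv)) [z 2 _]zE /=.
  by apply: nar_cong => //=; rewrite /trif /= maxoE.
- rewrite -(extz 2 _ (inHorn_tri vk iv jv lv)) [z 2 _]zE /=.
  by apply: ncl_cong => //=; rewrite /trif /= !maxoE.
Qed.

End HornToData.

Section DataToHorn.
Variables (C : TwoCat) (n : nat) (k : 'I_n.+1) (D : sdata C n).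
Hypothesis cohD : face_coherent k D.

Lemma coherent_horn m (t : mono m n) : inHorn k t -> coherent_on D (im_mono t).
Proof.
case/inHornP => v vk tv; apply: coherent_sub (cohD vk) => _ /existsP [a /eqP <-].
exact: tv.
Qed.

Lemma coherent_cst m : coherent_on D (im_mono (cst n m)).
Proof.
have E i : im_mono (cst n m) i -> i = ord0 by case/existsP => a /eqP <-.
split=> [i j Pi Pj | i j l Pi Pj | i j l o Pi Pj]; by rewrite (E i Pi) (E j Pj) ltnn.
Qed.

(* Outside the horn any value will do; we take the constant simplex. *)
Definition data_horn_at m (t : mono m n) (b : bool) (e : inHorn k t = b) : NLax C m :=
  (match b as b' return inHorn k t = b' -> NLax C m with
   | true => fun h => nlax_of (coherent_horn h)
   | false => fun _ => nlax_of (coherent_cst m) end) e.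

Definition data_horn m (t : mono m n) : NLax C m := data_horn_at (erefl (inHorn k t)).

Lemma data_hornE m (t : mono m n) (h : inHorn k t) : data_horn t = nlax_of (coherent_horn h).
Proof.
have gen b (e : inHorn k t = b) : data_horn_at e = nlax_of (coherent_horn h).
  by case: b e => e /=; [congr nlax_of; apply: proof_irrelevance | rewrite h in e].
exact: gen.
Qed.

Lemma data_horn_map : @horn_map (nerve C) n k data_horn.
Proof.
move=> m p t s h; rewrite /= (data_hornE h) (data_hornE (inHorn_comp s h)).
exact: NLax_ext.
Qed.

Lemma data_horn_extends D' (cohD' : coherent_on D' predT) : agree_faces k D' D ->
  @extends (nerve C) n k (fun m t => nlax_of (coherent_im cohD' t)) data_horn.
Proof.
move=> A m t ht; rewrite (data_hornE ht).
have [v vk tv] := inHornP ht.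
have At : agree_on D' D (im_mono t).
  by apply: agree_sub (A v vk) => _ /existsP [a /eqP <-]; apply: tv.
apply: NLax_ext => /=.
- by move=> a; case: At => + _ _; apply; apply: im_mono_in.
- by move=> a b h; apply: (agree_narN At); apply: im_mono_in.
- by move=> a b c h1 h2; apply: (agree_nclN At); apply: im_mono_in.
Qed.

End DataToHorn.

Lemma has_fillerP (C : TwoCat) n (k : 'I_n.+1) :
  has_filler (nerve C) k <-> horn_fillable C k.
Proof.
split=> [fillC D cohD | fillC x hornx].
- have [z [mapz extz]] := fillC _ (data_horn_map cohD).
  exists (data_of (z n (idm n))); first exact: data_of_coherent.
  move=> v vk; have [ob ar cl] := filler_agrees mapz extz vk.
  split=> [i iv | i j iv jv lt | i j l iv jv lv l1 l2].
  + by rewrite ob //= (data_hornE cohD (inHorn_tri vk iv iv iv)) /= /trif.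
  + rewrite ar //= (data_hornE cohD (inHorn_tri vk iv jv jv)) /=.
    by rewrite /trif /= (maxoE (ltnW lt)) /narN lt.
  + rewrite cl //= (data_hornE cohD (inHorn_tri vk iv jv lv)) /=.
    by rewrite /trif /= (maxoE (ltnW l1)) (maxoE (ltnW l2)) /nclN l1 l2.
- have [D cohD agreeD] := fillC _ (horn_data_face_coherent hornx).
  exact: horn_filler_of_data agreeD.
Qed.

Lemma unique_fillerP (C : TwoCat) n (k : 'I_n.+1) :
  unique_filler (nerve C) k <-> horn_unique C k.
Proof.
split=> [uniqC D D' cohD cohD' A | uniqC x z z' hornx mapz extz mapz' extz'].
- have faceD : face_coherent k D by move=> j _; apply: coherent_sub cohD.
  have selfD : agree_faces k D D by move=> j _; split.
  have := uniqC _ _ _ (data_horn_map faceD)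
    (nlax_of_simplex_map cohD) (data_horn_extends faceD cohD selfD)
    (nlax_of_simplex_map cohD') (data_horn_extends faceD cohD' (fun j jk => agree_sym (A j jk)))
    n (idm n).
  move=> E; split=> [i _ | i j _ _ lt | i j l _ _ _ l1 l2].
  + exact: (f_equal (fun P => nob P i) E).
  + by have := f_equal (fun P => nar P i j (ltnW lt)) E; rewrite /= /narN lt.
  + by have := f_equal (fun P => ncl P i j l (ltnW l1) (ltnW l2)) E; rewrite /= /nclN l1 l2.
- have [ob ar cl] := uniqC _ _ (data_of_coherent _) (data_of_coherent _)
    (fun j jk => agree_trans (filler_agrees mapz extz jk)
                             (agree_sym (filler_agrees mapz' extz' jk))).
  apply: (simplex_map_eq mapz mapz'); apply: NLax_ext_strict.
  + by move=> i; apply: ob.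
  + by move=> i j h lt; rewrite -!(data_of_ar _ h); apply: ar.
  + by move=> i j l h1 h2 l1 l2; rewrite -!(data_of_cl _ h1 h2); apply: cl.
Qed.

(** * Filling horns when 2-cells are invertible *)

Lemma chain2_I3 (P : 'I_3 -> 'I_3 -> Prop) : P t0 t1 -> P t0 t2 -> P t1 t2 ->
  forall i j : 'I_3, i < j -> P i j.
Proof. by move=> H1 H2 H3 [[|[|[|i]]] hi] [[|[|[|j]]] hj] //= _; fixord. Qed.

Lemma chain3_I3 (P : 'I_3 -> 'I_3 -> 'I_3 -> Prop) : P t0 t1 t2 ->
  forall i j l : 'I_3, i < j -> j < l -> P i j l.
Proof. by move=> H [[|[|[|i]]] hi] [[|[|[|j]]] hj] [[|[|[|l]]] hl] //= _ _; fixord. Qed.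

Lemma chain2_I4 (P : 'I_4 -> 'I_4 -> Prop) :
  P q0 q1 -> P q0 q2 -> P q0 q3 -> P q1 q2 -> P q1 q3 -> P q2 q3 ->
  forall i j : 'I_4, i < j -> P i j.
Proof.
by move=> H1 H2 H3 H4 H5 H6 [[|[|[|[|i]]]] hi] [[|[|[|[|j]]]] hj] //= _; fixord.
Qed.

Lemma chain3_I4 (P : 'I_4 -> 'I_4 -> 'I_4 -> Prop) :
  P q0 q1 q2 -> P q0 q1 q3 -> P q0 q2 q3 -> P q1 q2 q3 ->
  forall i j l : 'I_4, i < j -> j < l -> P i j l.
Proof.
move=> H1 H2 H3 H4 [[|[|[|[|i]]]] hi] [[|[|[|[|j]]]] hj] [[|[|[|[|l]]]] hl] //= _ _;
  by fixord.
Qed.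

Lemma chain4_I4 (P : 'I_4 -> 'I_4 -> 'I_4 -> 'I_4 -> Prop) : P q0 q1 q2 q3 ->
  forall i j l o : 'I_4, i < j -> j < l -> l < o -> P i j l o.
Proof.
move=> H [[|[|[|[|i]]]] hi] [[|[|[|[|j]]]] hj] [[|[|[|[|l]]]] hl] [[|[|[|[|o]]]] ho] //= _ _ _;
  by fixord.
Qed.

Lemma no_chain3_I2 (i j l : 'I_2) : i < j -> j < l -> False.
Proof. by case: i j l => [[|[|?]] ?] [[|[|?]] ?] [[|[|?]] ?]. Qed.

Lemma no_chain4_I3 (i j l o : 'I_3) : i < j -> j < l -> l < o -> False.
Proof. by case: i j l o => [[|[|[|?]]] ?] [[|[|[|?]]] ?] [[|[|[|?]]] ?] [[|[|[|?]]] ?]. Qed.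

Lemma no_chain3_I3_avoid (v i j l : 'I_3) : i < j -> j < l -> i != v -> j != v -> l != v -> False.
Proof. by case: v i j l => [[|[|[|?]]] ?] [[|[|[|?]]] ?] [[|[|[|?]]] ?] [[|[|[|?]]] ?]. Qed.

Lemma mem_edge_I3 (v k i j : 'I_3) : v != k -> i != v -> j != v -> i < j -> k \in [:: i; j].
Proof.
by case: v k i j => [[|[|[|?]]] ?] [[|[|[|?]]] ?] [[|[|[|?]]] ?] [[|[|[|?]]] ?].
Qed.

Lemma mem_triangle_I4 (v k i j l : 'I_4) : v != k -> i != v -> j != v -> l != v ->
  i < j -> j < l -> k \in [:: i; j; l].
Proof.
move=> vk iv jv lv lij ljl; move: i j l lij ljl iv jv lv.
by apply: chain3_I4; case: v k vk => [[|[|[|[|?]]]] ?] [[|[|[|[|?]]]] ?].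
Qed.

Section Faces.
Variables (C : TwoCat) (n : nat) (k : 'I_n.+1).
Implicit Types (D : sdata C n) (s : seq 'I_n.+1) (i j l o : 'I_n.+1).

(* The simplex spanned by [s] lies in the horn [Lambda^n_k]. *)
Definition in_horn s := exists2 v, v != k & v \notin s.

Lemma in_horn_card s : #|k :: s| <= n -> in_horn s.
Proof.
move=> hs; have : 0 < #|[predC k :: s]|.
  by rewrite -(ltn_add2l #|k :: s|) addn0 cardC card_ord ltnS.
by case/card_gt0P => v; rewrite !inE negb_or => /andP [vk vs]; exists v.
Qed.

Lemma in_horn_size s : size s < n -> in_horn s.
Proof. by move=> hs; apply: in_horn_card; exact: leq_trans (card_size (k :: s)) hs. Qed.

Lemma in_horn_mem s : k \in s -> size s <= n -> in_horn s.
Proof.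
move=> ks hs; apply: in_horn_card; apply: leq_trans hs.
rewrite (@eq_card _ _ (mem s)) ?card_size // => i.
by rewrite !inE; case: eqP => // ->.
Qed.

Lemma face_ar_typed D i j : face_coherent k D -> in_horn [:: i; j] -> i < j -> ar_typed D i j.
Proof.
move=> cohD [v vk]; rewrite !inE negb_or => /andP [vi vj].
by case: (cohD v vk) => + _ _; apply; rewrite /= eq_sym.
Qed.

Lemma face_cl_typed D i j l : face_coherent k D -> in_horn [:: i; j; l] ->
  i < j -> j < l -> cl_typed D i j l.
Proof.
move=> cohD [v vk]; rewrite !inE !negb_or => /and3P [vi vj vl].
by case: (cohD v vk) => _ + _; apply; rewrite /= eq_sym.
Qed.

Lemma face_cocycle D i j l o : face_coherent k D -> in_horn [:: i; j; l; o] ->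
  i < j -> j < l -> l < o -> cocycle_at D i j l o.
Proof.
move=> cohD [v vk]; rewrite !inE !negb_or => /and4P [vi vj vl vo].
by case: (cohD v vk) => _ _; apply; rewrite /= eq_sym.
Qed.

Lemma faces_ob D D' i : agree_faces k D D' -> in_horn [:: i] -> dob D i = dob D' i.
Proof.
by move=> A [v vk]; rewrite !inE => vi; case: (A v vk) => + _ _; apply; rewrite /= eq_sym.
Qed.

Lemma faces_ar D D' i j : agree_faces k D D' -> in_horn [:: i; j] -> i < j ->
  dar D i j = dar D' i j.
Proof.
move=> A [v vk]; rewrite !inE negb_or => /andP [vi vj].
by case: (A v vk) => _ + _; apply; rewrite /= eq_sym.
Qed.

Lemma faces_cl D D' i j l : agree_faces k D D' -> in_horn [:: i; j; l] ->
  i < j -> j < l -> dcl D i j l = dcl D' i j l.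
Proof.
move=> A [v vk]; rewrite !inE !negb_or => /and3P [vi vj vl].
by case: (A v vk) => _ _; apply; rewrite /= eq_sym.
Qed.

Lemma agree_faces_refl D : agree_faces k D D.
Proof. by move=> j _; split. Qed.

End Faces.

Section UpdateData.
Variables (C : TwoCat) (n : nat).
Implicit Types (D : sdata C n) (i j l : 'I_n.+1).

Definition set_ar D i0 j0 (f : Ar C) : sdata C n :=
  {| dob := dob D;
     dar := fun i j => if (i == i0) && (j == j0) then f else dar D i j;
     dcl := dcl D |}.

Definition set_cl D i0 j0 l0 (a : Cl C) : sdata C n :=
  {| dob := dob D; dar := dar D;
     dcl := fun i j l => if [&& i == i0, j == j0 & l == l0] then a else dcl D i j l |}.

End UpdateData.

Lemma coherent2 C (D : sdata C 2) : (forall i j : 'I_3, i < j -> ar_typed D i j) ->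
  cl_typed D t0 t1 t2 -> coherent_on D predT.
Proof.
move=> arD clD; split=> [i j _ _ | i j l _ _ _ | i j l o _ _ _ _ l1 l2 l3].
- exact: arD.
- by move: i j l; apply: chain3_I3.
- by case: (no_chain4_I3 l1 l2 l3).
Qed.

Lemma agree_faces2 C (k : 'I_3) (D D' : sdata C 2) : (forall i, dob D i = dob D' i) ->
  (forall i j : 'I_3, i < j -> k \in [:: i; j] -> dar D i j = dar D' i j) -> agree_faces k D D'.
Proof.
move=> ob ar v vk; split=> [i _ | i j iv jv lt | i j l iv jv lv l1 l2]; first exact: ob.
- exact: ar lt (mem_edge_I3 vk iv jv lt).
- by case: (no_chain3_I3_avoid l1 l2 iv jv lv).
Qed.

Lemma coherent3 C (D : sdata C 3) : (forall i j : 'I_4, i < j -> ar_typed D i j) ->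
  (forall i j l : 'I_4, i < j -> j < l -> cl_typed D i j l) -> cocycle_at D q0 q1 q2 q3 ->
  coherent_on D predT.
Proof.
move=> arD clD E; split=> [i j _ _ | i j l _ _ _ | i j l o _ _ _ _]; [exact: arD | exact: clD |].
by move: i j l o; apply: chain4_I4.
Qed.

Lemma agree_faces_set_cl C (k : 'I_4) (D : sdata C 3) i j l a :
  k \notin [:: i; j; l] -> agree_faces k (set_cl D i j l a) D.
Proof.
move=> ks v vk; split=> // i' j' l' iv jv lv l1 l2 /=.
case: ifP => // /and3P [/eqP Ei /eqP Ej /eqP El]; subst.
by rewrite (mem_triangle_I4 vk iv jv lv l1 l2) in ks.
Qed.

Lemma ord2_other (v k i : 'I_2) : v != k -> i != v -> i = k.
Proof. by move=> vk iv; apply: val_inj; move: vk iv; case: v k i => [[|[|?]] ?] [[|[|?]] ?] [[|[|?]] ?]. Qed.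

Lemma no_edge_I2_avoid (v i j : 'I_2) : i != v -> j != v -> i < j -> False.
Proof. by case: v i j => [[|[|?]] ?] [[|[|?]] ?] [[|[|?]] ?]. Qed.

Section Filling.
Variable C : TwoCat.
Hypothesis iso2C : forall a : Cl C, is_iso2 a.

Lemma horn_fillable_big n (k : 'I_n.+1) : 4 < n -> horn_fillable C k.
Proof.
move=> n4 D cohD; exists D; last exact: agree_faces_refl.
have small m : m <= 4 -> m < n by move=> m4; apply: leq_ltn_trans m4 n4.
split=> [i j _ _ | i j l _ _ _ | i j l o _ _ _ _].
- by apply: face_ar_typed cohD _; apply: in_horn_size; apply: small.
- by apply: face_cl_typed cohD _; apply: in_horn_size; apply: small.
- by apply: face_cocycle cohD _; apply: in_horn_size; apply: small.
Qed.

Lemma horn_fillable4 (k : 'I_5) : (0 < k < 4) \/ (forall f : Ar C, is_equivA f) ->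
  horn_fillable C k.
Proof.
move=> Hk D cohD; exists D; last exact: agree_faces_refl.
have arD (i j : 'I_5) : i < j -> ar_typed D i j.
  by apply: face_ar_typed cohD _; apply: in_horn_size.
have clD (i j l : 'I_5) : i < j -> j < l -> cl_typed D i j l.
  by apply: face_cl_typed cohD _; apply: in_horn_size.
split=> [i j _ _ | i j l _ _ _ | i j l o _ _ _ _]; [exact: arD | exact: clD |].
apply: (pentagon_cocycle iso2C arD clD Hk) => {}i {}j {}l {}o l1 l2 l3 hk.
exact: face_cocycle cohD (in_horn_mem hk isT) l1 l2 l3.
Qed.

Lemma horn_fillable3 (k : 'I_4) : (0 < k < 3) \/ (forall f : Ar C, is_equivA f) ->
  horn_fillable C k.
Proof.
move=> Hk D cohD.
have arD (i j : 'I_4) : i < j -> ar_typed D i j.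
  by apply: face_ar_typed cohD _; apply: in_horn_size.
have clD (i j l : 'I_4) : i < j -> j < l -> k \in [:: i; j; l] -> cl_typed D i j l.
  by move=> l1 l2 hk; apply: face_cl_typed cohD (in_horn_mem hk isT) l1 l2.
have [s01 t01] := arD q0 q1 isT; have [s02 t02] := arD q0 q2 isT.
have [s03 t03] := arD q0 q3 isT; have [s12 t12] := arD q1 q2 isT.
have [s13 t13] := arD q1 q3 isT; have [s23 t23] := arD q2 q3 isT.
have fill (i j l : 'I_4) a : k \notin [:: i; j; l] ->
    (forall i' j' l' : 'I_4, i' < j' -> j' < l' -> cl_typed (set_cl D i j l a) i' j' l') ->
    cocycle_at (set_cl D i j l a) q0 q1 q2 q3 ->
    exists2 D', coherent_on D' predT & agree_faces k D' D.
  by move=> ks clD' E; exists (set_cl D i j l a); [apply: coherent3 | apply: agree_faces_set_cl].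
case: k Hk cohD clD fill => [[|[|[|[|k]]]] hk] // Hk _ clD fill.
- have [//|equivC] := Hk.
  have [d012 c012] := clD q0 q1 q2 isT isT isT; have [d013 c013] := clD q0 q1 q3 isT isT isT.
  have [d023 c023] := clD q0 q2 q3 isT isT isT.
  have [a [da ca E]] := cocycle_solve123 iso2C s01 t01 s02 t02 s03 t03 s12 t12 s13 t13
    s23 t23 (equivC _) d012 c012 d013 c013 d023 c023.
  by apply: (fill q1 q2 q3 a) => //; apply: chain3_I4; split.
- have [d012 c012] := clD q0 q1 q2 isT isT isT; have [d013 c013] := clD q0 q1 q3 isT isT isT.
  have [d123 c123] := clD q1 q2 q3 isT isT isT.
  have [a [da ca E]] := cocycle_solve023 iso2C s01 t01 s02 t02 s03 t03 s12 t12 s13 t13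
    s23 t23 d012 c012 d013 c013 d123 c123.
  by apply: (fill q0 q2 q3 a) => //; apply: chain3_I4; split.
- have [d012 c012] := clD q0 q1 q2 isT isT isT; have [d023 c023] := clD q0 q2 q3 isT isT isT.
  have [d123 c123] := clD q1 q2 q3 isT isT isT.
  have [a [da ca E]] := cocycle_solve013 iso2C s01 t01 s02 t02 s03 t03 s12 t12 s13 t13
    s23 t23 d012 c012 d023 c023 d123 c123.
  by apply: (fill q0 q1 q3 a) => //; apply: chain3_I4; split.
- have [//|equivC] := Hk.
  have [d013 c013] := clD q0 q1 q3 isT isT isT; have [d023 c023] := clD q0 q2 q3 isT isT isT.
  have [d123 c123] := clD q1 q2 q3 isT isT isT.
  have [a [da ca E]] := cocycle_solve012 iso2C s01 t01 s02 t02 s03 t03 s12 t12 s13 t13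
    s23 t23 (equivC _) d013 c013 d023 c023 d123 c123.
  by apply: (fill q0 q1 q2 a) => //; apply: chain3_I4; split.
Qed.

Lemma horn_fillable2 (k : 'I_3) : (0 < k < 2) \/ (forall f : Ar C, is_equivA f) ->
  horn_fillable C k.
Proof.
move=> Hk D cohD.
have arD (i j : 'I_3) : i < j -> k \in [:: i; j] -> ar_typed D i j.
  by move=> lt hk; apply: face_ar_typed cohD (in_horn_mem hk isT) lt.
case: k Hk cohD arD => [[|[|[|k]]] hk] // Hk _ arD.
- have [s01 t01] := arD t0 t1 isT isT; have [s02 t02] := arD t0 t2 isT isT.
  have [//|equivC] := Hk.
  have [g [sg tg _ [eta [de ce _]]]] := equivC (dar D t0 t1).
  have [eta' [de' ce' _ _]] := iso2_inv (iso2C eta).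
  exists (set_cl (set_ar D t1 t2 (compA (dar D t0 t2) g)) t0 t1 t2
            (hcomp (id2 (dar D t0 t2)) eta')).
  + by apply: coherent2; [apply: chain2_I3; split=> //=; bnd | split=> /=; bnd].
  + by apply: agree_faces2 => //; apply: chain2_I3.
- have [s01 t01] := arD t0 t1 isT isT; have [s12 t12] := arD t1 t2 isT isT.
  exists (set_cl (set_ar D t0 t2 (compA (dar D t1 t2) (dar D t0 t1))) t0 t1 t2
            (id2 (compA (dar D t1 t2) (dar D t0 t1)))).
  + by apply: coherent2; [apply: chain2_I3; split=> //=; bnd | split=> /=; bnd].
  + by apply: agree_faces2 => //; apply: chain2_I3.
- have [s02 t02] := arD t0 t2 isT isT; have [s12 t12] := arD t1 t2 isT isT.
  have [//|equivC] := Hk.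
  have [g [sg tg [eps [de ce _]] _]] := equivC (dar D t1 t2).
  have [eps' [de' ce' _ _]] := iso2_inv (iso2C eps).
  exists (set_cl (set_ar D t0 t1 (compA g (dar D t0 t2))) t0 t1 t2
            (hcomp eps' (id2 (dar D t0 t2)))).
  + by apply: coherent2; [apply: chain2_I3; split=> //=; bnd | split=> /=; bnd].
  + by apply: agree_faces2 => //; apply: chain2_I3.
Qed.

Lemma horn_fillable1 (k : 'I_2) : horn_fillable C k.
Proof.
move=> D _; pose x := dob D k.
exists {| dob := fun _ => x; dar := fun _ _ => idA x; dcl := fun _ _ _ => id2 (idA x) |}.
- split=> [i j _ _ _ | i j l _ _ _ l1 l2 | i j l o _ _ _ _ l1 l2].
  + by split; rewrite /= ?src_idA ?tgt_idA.
  + by case: (no_chain3_I2 l1 l2).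
  + by case: (no_chain3_I2 l1 l2).
- move=> v vk; split=> [i iv | i j iv jv lt | i j l _ _ _ l1 l2].
  + by rewrite /= (ord2_other vk iv).
  + by case: (no_edge_I2_avoid iv jv lt).
  + by case: (no_chain3_I2 l1 l2).
Qed.

Lemma horn_fillable_all n (k : 'I_n.+1) : 0 < n ->
  (0 < k < n) \/ (forall f : Ar C, is_equivA f) -> horn_fillable C k.
Proof.
case: n k => [|[|[|[|[|n]]]]] k //= _ Hk.
- exact: horn_fillable1.
- exact: horn_fillable2.
- exact: horn_fillable3.
- exact: horn_fillable4.
- exact: horn_fillable_big.
Qed.

Lemma horn_unique_big n (k : 'I_n.+1) : 3 < n -> horn_unique C k.
Proof.
move=> n3 D D' _ _ A.
have small m : m <= 3 -> m < n by move=> m3; apply: leq_ltn_trans m3 n3.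
split=> [i _ | i j _ _ lt | i j l _ _ _ l1 l2].
- by apply: faces_ob A _; apply: in_horn_size; apply: small.
- by apply: faces_ar A _ lt; apply: in_horn_size; apply: small.
- by apply: faces_cl A _ l1 l2; apply: in_horn_size; apply: small.
Qed.

Lemma horn_unique3 (k : 'I_4) : (0 < k < 3) \/ (forall f : Ar C, is_equivA f) ->
  horn_unique C k.
Proof.
move=> Hk D D' [arD clD cocD] [_ clD' cocD'] A.
have ob i : dob D i = dob D' i by apply: faces_ob A _; apply: in_horn_size.
have ar (i j : 'I_4) : i < j -> dar D i j = dar D' i j.
  by move=> lt; apply: faces_ar A _ lt; apply: in_horn_size.
have cl (i j l : 'I_4) : i < j -> j < l -> k \in [:: i; j; l] -> dcl D i j l = dcl D' i j l.
  by move=> l1 l2 hk; apply: faces_cl A (in_horn_mem hk isT) l1 l2.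
have [s01 t01] := arD q0 q1 isT isT isT; have [s02 t02] := arD q0 q2 isT isT isT.
have [s03 t03] := arD q0 q3 isT isT isT; have [s12 t12] := arD q1 q2 isT isT isT.
have [s13 t13] := arD q1 q3 isT isT isT; have [s23 t23] := arD q2 q3 isT isT isT.
have E := cocD q0 q1 q2 q3 isT isT isT isT isT isT isT.
have := cocD' q0 q1 q2 q3 isT isT isT isT isT isT isT.
rewrite /cocycle_at -(ar q0 q1 isT) -(ar q2 q3 isT) => E'.
have cl'D (i j l : 'I_4) : i < j -> j < l ->
    dom2 (dcl D' i j l) = dar D i l /\ cod2 (dcl D' i j l) = compA (dar D j l) (dar D i j).
  by move=> l1 l2; rewrite !ar ?(ltn_trans l1 l2) //; apply: clD'.
have [d012 c012] := clD q0 q1 q2 isT isT isT isT isT; have [d013 c013] := clD q0 q1 q3 isT isT isT isT isT.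
have [d023 c023] := clD q0 q2 q3 isT isT isT isT isT; have [d123 c123] := clD q1 q2 q3 isT isT isT isT isT.
split=> [i _ | i j _ _ lt | i j l _ _ _]; [exact: ob | exact: ar | move: i j l].
case: k Hk A cl => [[|[|[|[|k]]]] hk] // Hk _ cl; apply: chain3_I4; try by apply: cl.
- have [//|equivC] := Hk; have [d' c'] := cl'D q1 q2 q3 isT isT.
  rewrite -(cl q0 q1 q2) -?(cl q0 q1 q3) -?(cl q0 q2 q3) // in E'.
  exact: (cocycle_unique123 iso2C s01 t01 s02 t02 s03 t03 s12 t12 s13 t13 s23 t23
    (equivC _) d013 c013 d123 c123 d' c' E E').
- have [d' c'] := cl'D q0 q2 q3 isT isT.
  rewrite -(cl q0 q1 q2) -?(cl q0 q1 q3) -?(cl q1 q2 q3) // in E'.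
  exact: (cocycle_unique023 iso2C s01 t01 s02 t02 s03 t03 s12 t12 s13 t13 s23 t23
    d012 c012 d023 c023 d' c' E E').
- have [d' c'] := cl'D q0 q1 q3 isT isT.
  rewrite -(cl q0 q1 q2) -?(cl q0 q2 q3) -?(cl q1 q2 q3) // in E'.
  exact: (cocycle_unique013 iso2C s01 t01 s02 t02 s03 t03 s12 t12 s13 t13 s23 t23
    d123 c123 d013 c013 d' c' E E').
- have [//|equivC] := Hk; have [d' c'] := cl'D q0 q1 q2 isT isT.
  rewrite -(cl q0 q1 q3) -?(cl q0 q2 q3) -?(cl q1 q2 q3) // in E'.
  exact: (cocycle_unique012 iso2C s01 t01 s02 t02 s03 t03 s12 t12 s13 t13 s23 t23
    (equivC _) d023 c023 d012 c012 d' c' E E').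
Qed.

Lemma horn_unique_all n (k : 'I_n.+1) : 2 < n ->
  (0 < k < n) \/ (forall f : Ar C, is_equivA f) -> horn_unique C k.
Proof.
case: n k => [|[|[|[|n]]]] k //= _ Hk; first exact: horn_unique3.
exact: horn_unique_big.
Qed.

End Filling.

(** * Inverses from horn fillers *)

Section ExplicitData.
Variable C : TwoCat.

Definition tri_data (o0 o1 o2 : Ob C) (f01 f02 f12 : Ar C) (a : Cl C) : sdata C 2 :=
  {| dob := fun i => match val i with 0 => o0 | 1 => o1 | _ => o2 end;
     dar := fun i j => match val i, val j with 0, 1 => f01 | 0, 2 => f02 | 1, 2 => f12
        | _, _ => f01 end;
     dcl := fun _ _ _ => a |}.

Definition tetra_data (o0 o1 o2 o3 : Ob C) (f01 f02 f03 f12 f13 f23 : Ar C)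
    (a012 a013 a023 a123 : Cl C) : sdata C 3 :=
  {| dob := fun i => match val i with 0 => o0 | 1 => o1 | 2 => o2 | _ => o3 end;
     dar := fun i j => match val i, val j with 0, 1 => f01 | 0, 2 => f02 | 0, 3 => f03
        | 1, 2 => f12 | 1, 3 => f13 | 2, 3 => f23 | _, _ => f01 end;
     dcl := fun i j l => match val i, val j, val l with 0, 1, 2 => a012 | 0, 1, 3 => a013
        | 0, 2, 3 => a023 | 1, 2, 3 => a123 | _, _, _ => a012 end |}.

Lemma face_coherent2 (k : 'I_3) (D : sdata C 2) :
  (forall i j : 'I_3, i < j -> k \in [:: i; j] -> ar_typed D i j) -> face_coherent k D.
Proof.
move=> arD v vk; split=> [i j iv jv lt | i j l iv jv lv l1 l2 | i j l o _ _ _ _ l1 l2 l3].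
- exact: arD lt (mem_edge_I3 vk iv jv lt).
- by case: (no_chain3_I3_avoid l1 l2 iv jv lv).
- by case: (no_chain4_I3 l1 l2 l3).
Qed.

Section Tetra.
Variables (o0 o1 o2 o3 : Ob C) (f01 f02 f03 f12 f13 f23 : Ar C).
Hypotheses (s01 : src f01 = o0) (t01 : tgt f01 = o1) (s02 : src f02 = o0) (t02 : tgt f02 = o2)
  (s03 : src f03 = o0) (t03 : tgt f03 = o3) (s12 : src f12 = o1) (t12 : tgt f12 = o2)
  (s13 : src f13 = o1) (t13 : tgt f13 = o3) (s23 : src f23 = o2) (t23 : tgt f23 = o3).
Variables (a012 a013 a023 a123 : Cl C).

Lemma tetra_data_ar_typed (i j : 'I_4) : i < j ->
  ar_typed (tetra_data o0 o1 o2 o3 f01 f02 f03 f12 f13 f23 a012 a013 a023 a123) i j.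
Proof using s01 t01 s02 t02 s03 t03 s12 t12 s13 t13 s23 t23.
by move: i j; apply: chain2_I4; split.
Qed.

Hypotheses (d012 : dom2 a012 = f02) (c012 : cod2 a012 = compA f12 f01)
  (d013 : dom2 a013 = f03) (c013 : cod2 a013 = compA f13 f01)
  (d123 : dom2 a123 = f13) (c123 : cod2 a123 = compA f23 f12).

Lemma tetra_data_face_coherent :
  face_coherent q1 (tetra_data o0 o1 o2 o3 f01 f02 f03 f12 f13 f23 a012 a013 a023 a123).
Proof using All.
move=> v vk; split=> [i j _ _ | i j l iv jv lv l1 l2 | i j l o iv jv lv ov l1 l2 l3].
- exact: tetra_data_ar_typed.
- move: i j l l1 l2 iv jv lv; apply: chain3_I4 => /= iv jv lv; try by split.
  by case: v vk iv jv lv => [[|[|[|[|?]]]] ?].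
- exfalso; move: i j l o l1 l2 l3 iv jv lv ov; apply: chain4_I4.
  by case: v vk => [[|[|[|[|?]]]] ?].
Qed.

End Tetra.
End ExplicitData.

Section Converse.
Variable C : TwoCat.
Implicit Types (a b al : Cl C) (f g : Ar C).

(* For [al : f => g], the horn [Lambda^3_1] with 2-cells [al] on 012 and identities
   on 013, 123 is filled by a 2-cell [be : g => f] on 023 whose cocycle condition
   reads [al * be = 1]. *)
Lemma section_of_horn31 : horn_fillable C q1 -> forall al,
  exists be, [/\ dom2 be = cod2 al, cod2 be = dom2 al & vcomp al be = id2 (cod2 al)].
Proof.
move=> fillC al; set f := dom2 al; set g := cod2 al; set x := src f; set y := tgt f.
have sg : src g = x by rewrite /g src_cod2.
have tg : tgt g = y by rewrite /g tgt_cod2.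
pose D := tetra_data x x y y (idA x) f g g g (idA y) al (id2 g) (id2 g) (id2 g).
have faceD : face_coherent q1 D by apply: tetra_data_face_coherent; bnd.
have [D' [_ clD' cocD'] A] := fillC D faceD.
have ar (i j : 'I_4) : i < j -> dar D' i j = dar D i j.
  by move=> lt; apply: faces_ar A _ lt; apply: in_horn_size.
have cl (i j l : 'I_4) : i < j -> j < l -> q1 \in [:: i; j; l] -> dcl D' i j l = dcl D i j l.
  by move=> l1 l2 hk; apply: faces_cl A (in_horn_mem hk isT) l1 l2.
set be := dcl D' q0 q2 q3.
have [dbe cbe] := clD' q0 q2 q3 isT isT isT isT isT.
rewrite !ar //= in dbe cbe.
exists be; split; try bnd.
have := cocD' q0 q1 q2 q3 isT isT isT isT isT isT isT.
rewrite /cocycle_at /cocycle !ar // (cl q1 q2 q3) // (cl q0 q1 q3) // (cl q0 q1 q2) //=.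
rewrite hcomp_id2 ?compA_idr' ?vcomp_idl' ?hcomp_idl'; try bnd.
by move=> ->.
Qed.

(* Uniqueness of fillers for the horn [Lambda^3_1] with [al] on 012 and 013 and
   an identity on 123: the 2-cells [ga : f => f] with [al * ga = al] all fill it. *)
Lemma cancel_of_horn31 : horn_unique C q1 -> forall al ga,
  dom2 ga = dom2 al -> cod2 ga = dom2 al -> vcomp al ga = al -> ga = id2 (dom2 al).
Proof.
move=> uniqC al ga dga cga alga; set f := dom2 al in dga cga *; set g := cod2 al.
set x := src f; set y := tgt f.
have sg : src g = x by rewrite /g src_cod2.
have tg : tgt g = y by rewrite /g tgt_cod2.
pose D := tetra_data x x y y (idA x) f f g g (idA y) al al (id2 f) (id2 g).
have arD (i j : 'I_4) : i < j -> ar_typed D i j by apply: tetra_data_ar_typed; bnd.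
have coh a : dom2 a = f -> cod2 a = f -> vcomp al a = al ->
    coherent_on (set_cl D q0 q2 q3 a) predT.
  move=> da ca ala; apply: coherent3 => //; first by apply: chain3_I4; split=> /=; bnd.
  rewrite /cocycle_at /cocycle /= hcomp_id2 ?compA_idr' ?vcomp_idl' ?hcomp_idl' ?ala //; bnd.
have A : agree_faces q1 (set_cl D q0 q2 q3 ga) (set_cl D q0 q2 q3 (id2 f)).
  move=> v vk; apply: agree_trans (agree_faces_set_cl _ _ _ vk) _ => //.
  exact: agree_sym (agree_faces_set_cl _ _ _ vk).
case: (uniqC _ _ (coh _ dga cga alga) (coh _ (dom_id2 f) (cod_id2 f) (vcomp_idr' (erefl f))) A).
by move=> _ _ /(_ q0 q2 q3 isT isT isT isT isT).
Qed.

Lemma iso2_of_horn31 : horn_fillable C q1 -> horn_unique C q1 -> forall a, is_iso2 a.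
Proof.
move=> fillC uniqC al; have [be [dbe cbe albe]] := section_of_horn31 fillC al.
exists be; split=> //; apply: cancel_of_horn31 => //; try bnd.
by rewrite vcomp_assoc ?albe ?vcomp_idl //; bnd.
Qed.

(* The outer horn [Lambda^2_0] with [f] on 01 and [1_x] on 02 is filled by some
   [g] on 12 together with a 2-cell [1_x => g f]. *)
Lemma unit_of_horn20 : horn_fillable C t0 -> forall f, exists g c,
  [/\ src g = tgt f, tgt g = src f, dom2 c = idA (src f) & cod2 c = compA g f].
Proof.
move=> fillC f; set x := src f; set y := tgt f.
pose D := tri_data x y x f (idA x) (idA y) (id2 (idA x)).
have faceD : face_coherent t0 D.
  by apply: face_coherent2; apply: chain2_I3 => //; split=> /=; bnd.
have [D' [arD' clD' _] A] := fillC D faceD.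
have ob i : dob D' i = dob D i by apply: faces_ob A _; apply: in_horn_size.
have ar (j : 'I_3) : t0 < j -> dar D' t0 j = dar D t0 j.
  by move=> j0; apply: faces_ar A _ j0; apply: in_horn_mem.
have [sg tg] := arD' t1 t2 isT isT isT.
have [dc cc] := clD' t0 t1 t2 isT isT isT isT isT.
exists (dar D' t1 t2), (dcl D' t0 t1 t2).
by rewrite sg tg !ob dc cc !ar.
Qed.

Lemma counit_of_horn22 : horn_fillable C t2 -> forall f, exists g c,
  [/\ src g = tgt f, tgt g = src f, dom2 c = idA (tgt f) & cod2 c = compA f g].
Proof.
move=> fillC f; set x := src f; set y := tgt f.
pose D := tri_data y x y (idA y) (idA y) f (id2 (idA y)).
have faceD : face_coherent t2 D.
  by apply: face_coherent2; apply: chain2_I3 => //; split=> /=; bnd.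
have [D' [arD' clD' _] A] := fillC D faceD.
have ob i : dob D' i = dob D i by apply: faces_ob A _; apply: in_horn_size.
have ar (i : 'I_3) : i < t2 -> dar D' i t2 = dar D i t2.
  by move=> i2; apply: faces_ar A _ i2; apply: in_horn_mem; rewrite // !inE eqxx orbT.
have [sg tg] := arD' t0 t1 isT isT isT.
have [dc cc] := clD' t0 t1 t2 isT isT isT isT isT.
exists (dar D' t0 t1), (dcl D' t0 t1 t2).
by rewrite sg tg !ob dc cc !ar.
Qed.

(* With [c : 1_x => g f] and [c' : 1_y => f g'], the 2-cell [f g => 1_y] is
   [f g => f g f g' => f g' => 1_y], built from [c'], [c^-1] and [c'^-1]. *)
Lemma equivA_of_horns : (forall a : Cl C, is_iso2 a) ->
  horn_fillable C t0 -> horn_fillable C t2 -> forall f, is_equivA f.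
Proof.
move=> iso2C fill20 fill22 f.
have [g [c [sg tg dc cc]]] := unit_of_horn20 fill20 f.
have [g' [c' [sg' tg' dc' cc']]] := counit_of_horn22 fill22 f.
have [eta [deta ceta _ _]] := iso2_inv (iso2C c).
have [eps [deps ceps _ _]] := iso2_inv (iso2C c').
rewrite cc in deta; rewrite dc in ceta; rewrite cc' in deps; rewrite dc' in ceps.
exists g; split=> //; last by exists eta; split.
exists (vcomp eps (vcomp (hcomp (hcomp (id2 f) eta) (id2 g')) (hcomp (id2 (compA f g)) c'))).
by split; [bnd | bnd | apply: iso2C].
Qed.

End Converse.

Theorem mainTheorem2 (C : TwoCat) :
  (is_weak_cat (nerve C) 2 <-> forall a : Cl C, is_iso2 a) /\
  (is_weak_grpd (nerve C) 2 <-> is_2groupoid C).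
Proof.
have iso2_of_cat : is_weak_cat (nerve C) 2 -> forall a : Cl C, is_iso2 a.
  move=> catC; have [/has_fillerP fill31 /(_ isT) /unique_fillerP uniq31] := catC 3 q1 isT.
  exact: iso2_of_horn31.
have inner_n k n : 0 < k < n -> 0 < n by case/andP=> _; apply: leq_ltn_trans.
split; split.
- exact: iso2_of_cat.
- move=> iso2C n k kn; split; first by apply/has_fillerP; apply: (horn_fillable_all iso2C (inner_n _ _ kn)); left.
  by move=> n2; apply/unique_fillerP; apply: (horn_unique_all iso2C n2); left.
- move=> grpdC; have iso2C : forall a : Cl C, is_iso2 a.
    by apply: iso2_of_cat => n k kn; apply: grpdC (inner_n _ _ kn).
  have [/has_fillerP fill20 _] := grpdC 2 t0 isT.
  have [/has_fillerP fill22 _] := grpdC 2 t2 isT.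
  by split=> //; apply: equivA_of_horns.
- case=> iso2C equivC n k n0.
  split; first by apply/has_fillerP; apply: (horn_fillable_all iso2C n0); right.
  by move=> n2; apply/unique_fillerP; apply: (horn_unique_all iso2C n2); right.
Qed.
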